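(* Let $N\ge1$, $\sigma>0$, let $\psi:[0,2]\to[0,+\infty)$ be a decreasing $C^1$ function with $\psi(2)=0$ and $\psi'(2)<0$, and let $(x_i,v_i)_{i=1}^N$ be the solution of $$\dot x_i=v_i,\qquad \dot v_i=-\frac{\|v_i\|^2}{\|x_i\|^2}x_i+\sum_{j=1}^N\frac{\psi_{ij}}{N}\big(R(x_j,x_i)v_j-v_i\big)+\sum_{k=1}^N\frac{\sigma}{N}\big(\|x_i\|^2x_k-\langle x_i,x_k\rangle x_i\big),\quad \psi_{ij}=\psi(\|x_i-x_j\|),$$ with initial data satisfying $\|x_i(0)\|=1$, $\langle v_i(0),x_i(0)\rangle=0$ for all $i$. If $2\sigma>N^2\mathcal{E}(0)$, then the system has time-asymptotic flocking on the unit sphere, i.e. $$\lim_{t\to\infty}\max_{1\le i,j\le N}\|x_i(t)+x_j(t)\|\,\big\|R(x_j(t),x_i(t))v_j(t)-v_i(t)\big\|=0\quad\text{and}\quad \liminf_{t\ge0}\min_{1\le i,j\le N}\|x_i(t)+x_j(t)\|>0.$$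
   Context: $\|\cdot\|$ is the Euclidean norm, $\langle\cdot,\cdot\rangle$ the inner product on $\mathbb{R}^3$. For column vectors $x_1,x_2$ in the unit sphere with $x_1\ne-x_2$, $R(x_1,x_2)=I$ if $x_1=x_2$, and otherwise $R(x_1,x_2)=\langle x_1,x_2\rangle I-x_1x_2^T+x_2x_1^T+(1-\langle x_1,x_2\rangle)uu^T$, $u=\frac{x_1\times x_2}{\|x_1\times x_2\|}$. When $x_j=-x_i$, $\psi_{ij}R(x_j,x_i)v_j$ and $\|x_i+x_j\|\,\|R(x_j,x_i)v_j-v_i\|$ are taken to be $0$. The energy is $\mathcal{E}=\frac1N\sum_{k=1}^N\|v_k\|^2+\frac{\sigma}{2N^2}\sum_{k,l=1}^N\|x_k-x_l\|^2$. ''Time-asymptotic flocking on a sphere'' means exactly the two displayed conditions (velocity alignment and antipodal points avoidance). *)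

From Stdlib Require Import Reals Lra.
From Coquelicot Require Import Coquelicot.
Open Scope R_scope.

Definition vec3 : Type := (R * R * R)%type.

Definition vx (a : vec3) : R := fst (fst a).
Definition vy (a : vec3) : R := snd (fst a).
Definition vz (a : vec3) : R := snd a.
Definition mkv (a b c : R) : vec3 := (a, b, c).

Definition vadd (a b : vec3) : vec3 := mkv (vx a + vx b) (vy a + vy b) (vz a + vz b).
Definition vsub (a b : vec3) : vec3 := mkv (vx a - vx b) (vy a - vy b) (vz a - vz b).
Definition vscal (c : R) (a : vec3) : vec3 := mkv (c * vx a) (c * vy a) (c * vz a).
Definition vzero : vec3 := mkv 0 0 0.

Definition vdot (a b : vec3) : R := vx a * vx b + vy a * vy b + vz a * vz b.
Definition vnorm (a : vec3) : R := sqrt (vdot a a).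
Definition vcross (a b : vec3) : vec3 :=
  mkv (vy a * vz b - vz a * vy b) (vz a * vx b - vx a * vz b) (vx a * vy b - vy a * vx b).

Definition vec3_eq_dec (a b : vec3) : {a = b} + {a <> b}.
Proof.
  destruct a as [[a1 a2] a3], b as [[b1 b2] b3].
  destruct (Req_EM_T a1 b1) as [e1|n1]; [|right; congruence].
  destruct (Req_EM_T a2 b2) as [e2|n2]; [|right; congruence].
  destruct (Req_EM_T a3 b3) as [e3|n3]; [|right; congruence].
  left; subst; reflexivity.
Defined.

(** [Rapp x1 x2 w] is the matrix-vector product R(x1,x2) w, with
    R(x1,x2) = I if x1 = x2, and otherwise
    R(x1,x2) = <x1,x2> I - x1 x2^T + x2 x1^T + (1 - <x1,x2>) u u^T,
    u = (x1 x x2)/||x1 x x2||.  When x1 = -x2 the product is taken to be 0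
    (the convention of the paper: psi_ij R(x_j,x_i) v_j := 0). *)
Definition Rapp (x1 x2 w : vec3) : vec3 :=
  if vec3_eq_dec x1 x2 then w
  else if vec3_eq_dec x1 (vscal (-1) x2) then vzero
  else
    let u := vscal (/ vnorm (vcross x1 x2)) (vcross x1 x2) in
    vadd (vadd (vsub (vscal (vdot x1 x2) w) (vscal (vdot x2 w) x1))
               (vscal (vdot x1 w) x2))
         (vscal ((1 - vdot x1 x2) * vdot u w) u).

Fixpoint rsum (n : nat) (f : nat -> R) : R :=
  match n with O => 0 | S m => rsum m f + f m end.

Fixpoint vsum (n : nat) (f : nat -> vec3) : vec3 :=
  match n with O => vzero | S m => vadd (vsum m f) (f m) end.

Fixpoint rmax (n : nat) (f : nat -> R) : R :=
  match n with
  | O => 0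
  | S O => f O
  | S m => Rmax (rmax m f) (f m)
  end.

Fixpoint rmin (n : nat) (f : nat -> R) : R :=
  match n with
  | O => 0
  | S O => f O
  | S m => Rmin (rmin m f) (f m)
  end.

Definition rmax2 (n : nat) (f : nat -> nat -> R) : R := rmax n (fun i => rmax n (f i)).
Definition rmin2 (n : nat) (f : nat -> nat -> R) : R := rmin n (fun i => rmin n (f i)).

Definition is_derive3 (f : R -> vec3) (t : R) (d : vec3) : Prop :=
  is_derive (fun s => vx (f s)) t (vx d) /\
  is_derive (fun s => vy (f s)) t (vy d) /\
  is_derive (fun s => vz (f s)) t (vz d).

Definition right_cont3 (f : R -> vec3) (t : R) : Prop :=
  filterlim (fun s => vx (f s)) (at_right t) (locally (vx (f t))) /\
  filterlim (fun s => vy (f s)) (at_right t) (locally (vy (f t))) /\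
  filterlim (fun s => vz (f s)) (at_right t) (locally (vz (f t))).

Definition in02 (r : R) : Prop := 0 <= r <= 2.

Definition deriv_within02 (f : R -> R) (r l : R) : Prop :=
  filterlim (fun h => (f (r + h) - f r) / h)
            (within (fun h => h <> 0 /\ in02 (r + h)) (locally 0))
            (locally l).

Definition admissible_psi (psi : R -> R) : Prop :=
  (forall r, in02 r -> 0 <= psi r) /\
  (forall r s, in02 r -> in02 s -> r <= s -> psi s <= psi r) /\
  (exists dpsi : R -> R,
      (forall r, in02 r -> deriv_within02 psi r (dpsi r)) /\
      (forall r, in02 r -> filterlim dpsi (within in02 (locally r)) (locally (dpsi r))) /\
      dpsi 2 < 0) /\
  psi 2 = 0.

Definition vel_rhs (N : nat) (sigma : R) (psi : R -> R)
           (x v : nat -> vec3) (i : nat) : vec3 :=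
  vadd (vadd
    (vscal (- (vnorm (v i) ^ 2 / vnorm (x i) ^ 2)) (x i))
    (vsum N (fun j => vscal (psi (vnorm (vsub (x i) (x j))) / INR N)
                            (vsub (Rapp (x j) (x i) (v j)) (v i)))))
    (vsum N (fun k => vscal (sigma / INR N)
                            (vsub (vscal (vnorm (x i) ^ 2) (x k))
                                  (vscal (vdot (x i) (x k)) (x i))))).

Definition is_solution (N : nat) (sigma : R) (psi : R -> R)
           (x v : nat -> R -> vec3) : Prop :=
  forall i, (i < N)%nat ->
    right_cont3 (x i) 0 /\ right_cont3 (v i) 0 /\
    forall t, 0 < t ->
      is_derive3 (x i) t (v i t) /\
      is_derive3 (v i) t (vel_rhs N sigma psi (fun j => x j t) (fun j => v j t) i).

Definition energy (N : nat) (sigma : R) (x v : nat -> vec3) : R :=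
  / INR N * rsum N (fun k => vnorm (v k) ^ 2)
  + sigma / (2 * INR N ^ 2) * rsum N (fun k => rsum N (fun l => vnorm (vsub (x k) (x l)) ^ 2)).

(* On the set where |x_i| = 1 and <x_i, v_i> = 0 the energy is a Lyapunov function,
   E' = -(1/N^2) sum_ij psi_ij ||R(x_j,x_i) v_j - v_i||^2, so ||x_i - x_j||^2 stays below
   N^2 E(0) / sigma < 2: the particles remain in an open hemisphere, which bounds
   ||x_i + x_j|| from below and keeps psi_ij away from 0.  Conversely, as long as that
   distance bound holds, the radial components <x_i, v_i> obey a linear differential
   inequality with zero initial data, so the constraints propagate; a continuity argument
   closes this loop for all times.  The dissipation then dominates the total alignment
   error, whose derivative is bounded, and Barbalat's lemma drives it to zero. *)

From Stdlib Require Import Reals Lra Lia Psatz Classical.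
From Coquelicot Require Import Coquelicot.
Open Scope R_scope.

(** * Vectors *)

Ltac unfold_vec := unfold vdot, vadd, vsub, vscal, vcross, vzero, mkv, vx, vy, vz in *; simpl in *.

Lemma vec3_ext a b : vx a = vx b -> vy a = vy b -> vz a = vz b -> a = b.
Proof. destruct a as [[? ?] ?], b as [[? ?] ?]; unfold vx, vy, vz; simpl; intros; subst; reflexivity. Qed.

Lemma vdot_comm a b : vdot a b = vdot b a.
Proof. unfold_vec; ring. Qed.
Lemma vdot_addl a b c : vdot (vadd a b) c = vdot a c + vdot b c.
Proof. unfold_vec; ring. Qed.
Lemma vdot_addr a b c : vdot c (vadd a b) = vdot c a + vdot c b.
Proof. unfold_vec; ring. Qed.
Lemma vdot_subl a b c : vdot (vsub a b) c = vdot a c - vdot b c.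
Proof. unfold_vec; ring. Qed.
Lemma vdot_subr a b c : vdot c (vsub a b) = vdot c a - vdot c b.
Proof. unfold_vec; ring. Qed.
Lemma vdot_scall k a c : vdot (vscal k a) c = k * vdot a c.
Proof. unfold_vec; ring. Qed.
Lemma vdot_scalr k a c : vdot c (vscal k a) = k * vdot c a.
Proof. unfold_vec; ring. Qed.
Lemma vdot_zerol a : vdot vzero a = 0.
Proof. unfold_vec; ring. Qed.
Lemma vdot_zeror a : vdot a vzero = 0.
Proof. unfold_vec; ring. Qed.
Lemma vdot_ge0 a : 0 <= vdot a a.
Proof. unfold_vec; nra. Qed.
Lemma vdot_eq0 a : vdot a a = 0 -> a = vzero.
Proof. destruct a as [[? ?] ?]; unfold_vec; intros; apply vec3_ext; unfold_vec; nra. Qed.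
Lemma vdot_vsum a n f : vdot a (vsum n f) = rsum n (fun k => vdot a (f k)).
Proof. induction n; simpl; [apply vdot_zeror|rewrite vdot_addr, IHn; reflexivity]. Qed.

Lemma lagrange_identity a b : vdot (vcross a b) (vcross a b) = vdot a a * vdot b b - vdot a b ^ 2.
Proof. unfold_vec; ring. Qed.
Lemma cauchy_schwarz a b : vdot a b ^ 2 <= vdot a a * vdot b b.
Proof. pose proof (lagrange_identity a b); pose proof (vdot_ge0 (vcross a b)); lra. Qed.

Lemma vnorm_sq a : vnorm a ^ 2 = vdot a a.
Proof. apply pow2_sqrt, vdot_ge0. Qed.
Lemma vnorm_ge0 a : 0 <= vnorm a.
Proof. apply sqrt_pos. Qed.
Lemma vnorm_le a r : 0 <= r -> vdot a a <= r ^ 2 -> vnorm a <= r.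
Proof. intros hr h; rewrite <- (sqrt_pow2 r hr); apply sqrt_le_1_alt, h. Qed.
Lemma vnorm_subC a b : vnorm (vsub a b) = vnorm (vsub b a).
Proof. unfold vnorm; f_equal; unfold_vec; ring. Qed.

Section UnitVectors.
Variables a b : vec3.
Hypotheses (ha : vdot a a = 1) (hb : vdot b b = 1).

Lemma vdot_sub_unit : vdot (vsub a b) (vsub a b) = 2 - 2 * vdot a b.
Proof. rewrite !vdot_subl, !vdot_subr, (vdot_comm b a); lra. Qed.
Lemma vdot_add_unit : vdot (vadd a b) (vadd a b) = 2 + 2 * vdot a b.
Proof. rewrite !vdot_addl, !vdot_addr, (vdot_comm b a); lra. Qed.

Lemma vdot_unit_bound : Rabs (vdot a b) <= 1.
Proof. pose proof (cauchy_schwarz a b) as h; rewrite ha, hb in h; apply Rabs_le; nra. Qed.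

Lemma dist_unit_le2 : vdot (vsub a b) (vsub a b) <= 4.
Proof. rewrite vdot_sub_unit; pose proof vdot_unit_bound as h; apply Rabs_le_between in h; lra. Qed.

Lemma unit_lt1 : a <> b -> vdot a b < 1.
Proof.
  intros hne; destruct (Rle_lt_dec 1 (vdot a b)) as [h|]; [exfalso|lra].
  pose proof (vdot_ge0 (vsub a b)) as h0; rewrite vdot_sub_unit in h0.
  assert (e : vsub a b = vzero) by (apply vdot_eq0; rewrite vdot_sub_unit; lra).
  apply hne, vec3_ext;
    destruct a as [[? ?] ?], b as [[? ?] ?]; unfold_vec; injection e; lra.
Qed.

Lemma unit_not_antipodal : a <> vscal (-1) b -> 0 < 1 + vdot a b.
Proof.
  intros hne; destruct (Rle_lt_dec (1 + vdot a b) 0) as [h|]; [exfalso|lra].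
  pose proof (vdot_ge0 (vadd a b)) as h0; rewrite vdot_add_unit in h0.
  assert (e : vadd a b = vzero) by (apply vdot_eq0; rewrite vdot_add_unit; lra).
  apply hne, vec3_ext;
    destruct a as [[? ?] ?], b as [[? ?] ?]; unfold_vec; injection e; lra.
Qed.

End UnitVectors.

(** * Finite sums and extrema *)

Lemma rsum_ext n f g : (forall k, (k < n)%nat -> f k = g k) -> rsum n f = rsum n g.
Proof.
  induction n; simpl; intros H; auto.
  rewrite IHn by (intros; apply H; lia); rewrite H by lia; reflexivity.
Qed.
Lemma rsum_plus n f g : rsum n (fun k => f k + g k) = rsum n f + rsum n g.
Proof. induction n; simpl; [ring|rewrite IHn; ring]. Qed.
Lemma rsum_scal n c f : rsum n (fun k => c * f k) = c * rsum n f.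
Proof. induction n; simpl; [ring|rewrite IHn; ring]. Qed.
Lemma rsum_const n c : rsum n (fun _ => c) = INR n * c.
Proof. induction n; simpl rsum; [simpl; ring|rewrite IHn, S_INR; ring]. Qed.
Lemma rsum_le n f g : (forall k, (k < n)%nat -> f k <= g k) -> rsum n f <= rsum n g.
Proof.
  induction n; simpl; intros H; [lra|].
  pose proof (H n ltac:(lia)); pose proof (IHn ltac:(intros; apply H; lia)); lra.
Qed.
Lemma rsum_nonneg n f : (forall k, (k < n)%nat -> 0 <= f k) -> 0 <= rsum n f.
Proof. intros H; rewrite <- (Rmult_0_r (INR n)), <- rsum_const; apply rsum_le, H. Qed.
Lemma rsum_abs n f : Rabs (rsum n f) <= rsum n (fun k => Rabs (f k)).
Proof. induction n; simpl; [rewrite Rabs_R0; lra|eapply Rle_trans; [apply Rabs_triang|lra]]. Qed.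
Lemma rsum_swap n m f :
  rsum n (fun k => rsum m (fun l => f k l)) = rsum m (fun l => rsum n (fun k => f k l)).
Proof.
  induction n; simpl; [induction m; simpl; auto; rewrite <- IHm; ring|].
  rewrite IHn, <- rsum_plus; reflexivity.
Qed.

Lemma rsum_ge_term n f i : (forall k, (k < n)%nat -> 0 <= f k) -> (i < n)%nat -> f i <= rsum n f.
Proof.
  induction n as [|m IH]; intros hf Hi; [lia|simpl].
  assert (hm : forall k, (k < m)%nat -> 0 <= f k) by (intros; apply hf; lia).
  destruct (Nat.eq_dec i m) as [->|]; [pose proof (rsum_nonneg m f hm); lra|].
  pose proof (IH hm ltac:(lia)); pose proof (hf m ltac:(lia)); lra.
Qed.

Lemma rsum_ge_two_terms n f i j : (forall k, (k < n)%nat -> 0 <= f k) ->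
  (i < n)%nat -> (j < n)%nat -> i <> j -> f i + f j <= rsum n f.
Proof.
  induction n as [|m IH]; intros hf Hi Hj Hij; [lia|simpl].
  assert (hm : forall k, (k < m)%nat -> 0 <= f k) by (intros; apply hf; lia).
  destruct (Nat.eq_dec i m) as [->|]; [pose proof (rsum_ge_term m f j hm ltac:(lia)); lra|].
  destruct (Nat.eq_dec j m) as [->|]; [pose proof (rsum_ge_term m f i hm ltac:(lia)); lra|].
  pose proof (IH hm ltac:(lia) ltac:(lia) Hij); pose proof (hf m ltac:(lia)); lra.
Qed.

Definition rsum2 n (f : nat -> nat -> R) := rsum n (fun k => rsum n (fun l => f k l)).

Lemma rsum2_ext n f g : (forall k l, (k < n)%nat -> (l < n)%nat -> f k l = g k l) -> rsum2 n f = rsum2 n g.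
Proof. intros H; apply rsum_ext; intros; apply rsum_ext; auto. Qed.
Lemma rsum2_plus n f g : rsum2 n (fun k l => f k l + g k l) = rsum2 n f + rsum2 n g.
Proof. unfold rsum2; rewrite <- rsum_plus; apply rsum_ext; intros; apply rsum_plus. Qed.
Lemma rsum2_scal n c f : rsum2 n (fun k l => c * f k l) = c * rsum2 n f.
Proof. unfold rsum2; rewrite <- rsum_scal; apply rsum_ext; intros; apply rsum_scal. Qed.
Lemma rsum2_swap n f : rsum2 n f = rsum2 n (fun k l => f l k).
Proof. apply rsum_swap. Qed.
Lemma rsum2_le n f g : (forall k l, (k < n)%nat -> (l < n)%nat -> f k l <= g k l) -> rsum2 n f <= rsum2 n g.
Proof. intros H; apply rsum_le; intros; apply rsum_le; auto. Qed.
Lemma rsum2_nonneg n f : (forall k l, (k < n)%nat -> (l < n)%nat -> 0 <= f k l) -> 0 <= rsum2 n f.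
Proof. intros H; apply rsum_nonneg; intros; apply rsum_nonneg; auto. Qed.

Section NonnegDoubleSums.
Variables (n : nat) (f : nat -> nat -> R).
Hypothesis hf : forall k l, (k < n)%nat -> (l < n)%nat -> 0 <= f k l.

Let row_nonneg k : (k < n)%nat -> forall l, (l < n)%nat -> 0 <= f k l.
Proof. auto. Qed.
Let rows_nonneg : forall k, (k < n)%nat -> 0 <= rsum n (f k).
Proof. intros; apply rsum_nonneg; auto. Qed.

Lemma rsum2_ge_term i j : (i < n)%nat -> (j < n)%nat -> f i j <= rsum2 n f.
Proof.
  intros hi hj; eapply Rle_trans; [apply (rsum_ge_term n (f i) j (row_nonneg i hi) hj)|].
  apply (rsum_ge_term n (fun k => rsum n (f k)) i rows_nonneg hi).
Qed.

Lemma rsum2_ge_pair i j : (i < n)%nat -> (j < n)%nat -> i <> j -> f i j + f j i <= rsum2 n f.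
Proof.
  intros hi hj hij; eapply Rle_trans; [|apply (rsum_ge_two_terms n (fun k => rsum n (f k)) i j rows_nonneg hi hj hij)].
  apply Rplus_le_compat; [apply (rsum_ge_term n (f i) j (row_nonneg i hi) hj)|apply (rsum_ge_term n (f j) i (row_nonneg j hj) hi)].
Qed.

End NonnegDoubleSums.

Lemma rmax_le n f c : (1 <= n)%nat -> (forall k, (k < n)%nat -> f k <= c) -> rmax n f <= c.
Proof.
  destruct n as [|n]; [lia|intros _]; induction n; intros H; [apply H; lia|].
  change (rmax (S (S n)) f) with (Rmax (rmax (S n) f) (f (S n))).
  apply Rmax_lub; [apply IHn; intros; apply H|apply H]; lia.
Qed.
Lemma rmax_ge_first n f : (1 <= n)%nat -> f 0%nat <= rmax n f.
Proof.
  destruct n as [|n]; [lia|intros _]; induction n; [simpl; lra|].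
  change (rmax (S (S n)) f) with (Rmax (rmax (S n) f) (f (S n))).
  eapply Rle_trans; [exact IHn|apply Rmax_l].
Qed.
Lemma rmin_ge n f c : (1 <= n)%nat -> (forall k, (k < n)%nat -> c <= f k) -> c <= rmin n f.
Proof.
  destruct n as [|n]; [lia|intros _]; induction n; intros H; [apply H; lia|].
  change (rmin (S (S n)) f) with (Rmin (rmin (S n) f) (f (S n))).
  apply Rmin_glb; [apply IHn; intros; apply H|apply H]; lia.
Qed.

Lemma Rabs_mul_le_rsum_sq n f i j : (i < n)%nat -> (j < n)%nat ->
  Rabs (f i) * Rabs (f j) <= rsum n (fun k => f k * f k).
Proof.
  intros hi hj; set (B := rsum n (fun k => f k * f k)).
  assert (hsq : forall k, (k < n)%nat -> Rabs (f k) * Rabs (f k) <= B).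
  { intros k hk; rewrite <- Rabs_mult, Rabs_right by (apply Rle_ge, Rle_0_sqr).
    apply (rsum_ge_term n (fun k => f k * f k)); [intros; apply Rle_0_sqr|exact hk]. }
  pose proof (hsq i hi); pose proof (hsq j hj); pose proof (Rabs_pos (f i)); pose proof (Rabs_pos (f j)); nra.
Qed.

Lemma rsum_abs_le n f M : (forall k, (k < n)%nat -> Rabs (f k) <= M) -> Rabs (rsum n f) <= INR n * M.
Proof. intros H; rewrite <- rsum_const; eapply Rle_trans; [apply rsum_abs|apply rsum_le, H]. Qed.

(** * The transport map R *)

(* Closed form of R(x1,x2) w off the antipodes, with k = x1 x x2 and c = <x1,x2>:
   -x1 x2^T w + x2 x1^T w = k x w, and (1 - c) u u^T = k k^T / (1 + c) because
   ||k||^2 = 1 - c^2 on the sphere. *)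
Definition rodrigues (x1 x2 w : vec3) : vec3 :=
  vadd (vadd (vscal (vdot x1 x2) w) (vcross (vcross x1 x2) w))
       (vscal (vdot (vcross x1 x2) w / (1 + vdot x1 x2)) (vcross x1 x2)).

Section Rotation.
Variables x1 x2 : vec3.
Hypotheses (h1 : vdot x1 x1 = 1) (h2 : vdot x2 x2 = 1).

Let k := vcross x1 x2.
Let c := vdot x1 x2.

Let vdot_k : vdot k k = (1 - c) * (1 + c).
Proof. unfold k, c; rewrite lagrange_identity, h1, h2; ring. Qed.

Lemma Rapp_rodrigues w : x1 <> vscal (-1) x2 -> Rapp x1 x2 w = rodrigues x1 x2 w.
Proof.
  intros hanti; pose proof (unit_not_antipodal x1 x2 h1 h2 hanti) as hc; fold c in hc.
  unfold Rapp, rodrigues; destruct (vec3_eq_dec x1 x2) as [<-|hne].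
  - rewrite h1; replace (vcross x1 x1) with vzero by (apply vec3_ext; unfold_vec; ring).
    apply vec3_ext; unfold_vec; field.
  - destruct (vec3_eq_dec x1 (vscal (-1) x2)) as [|_]; [contradiction|].
    pose proof (unit_lt1 x1 x2 h1 h2 hne) as hc1; fold c k in hc1 |- *; cbv zeta.
    set (n := vnorm k).
    assert (hnn : n * n = (1 - c) * (1 + c)) by (rewrite <- vdot_k, <- vnorm_sq; unfold n; ring).
    assert (hn0 : n <> 0) by (intro e; rewrite e in hnn; nra).
    assert (hscal : forall K a, (1 - c) * (/ n * K) * (/ n * a) = K / (1 + c) * a).
    { intros K a; replace (1 - c) with (n * n / (1 + c)) by (rewrite hnn; field; lra); field; lra. }
    rewrite vdot_scall.
    apply vec3_ext; unfold vadd, vsub, vscal, mkv, vx, vy, vz; simpl; rewrite hscal;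
      unfold k, c; unfold vcross, vdot, mkv, vx, vy, vz; simpl; ring.
Qed.

Lemma rodrigues_isometry w : 1 + c <> 0 ->
  vdot (rodrigues x1 x2 w) (rodrigues x1 x2 w) = vdot w w.
Proof.
  intros hc; unfold rodrigues; fold k c; set (K := vdot k w).
  rewrite !vdot_addl, !vdot_addr, !vdot_scall, !vdot_scalr.
  assert (e1 : vdot w (vcross k w) = 0) by (unfold_vec; ring).
  assert (e2 : vdot (vcross k w) w = 0) by (unfold_vec; ring).
  assert (e3 : vdot k (vcross k w) = 0) by (unfold_vec; ring).
  assert (e4 : vdot (vcross k w) k = 0) by (unfold_vec; ring).
  rewrite e1, e2, e3, e4, lagrange_identity, vdot_k, (vdot_comm w k); fold K; field; exact hc.
Qed.

Lemma Rapp_isometry w : x1 <> vscal (-1) x2 -> vdot (Rapp x1 x2 w) (Rapp x1 x2 w) = vdot w w.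
Proof.
  intros hanti; rewrite Rapp_rodrigues by exact hanti.
  apply rodrigues_isometry; pose proof (unit_not_antipodal x1 x2 h1 h2 hanti) as hc; fold c in hc; lra.
Qed.

Lemma Rapp_contraction w : vdot (Rapp x1 x2 w) (Rapp x1 x2 w) <= vdot w w.
Proof.
  destruct (vec3_eq_dec x1 (vscal (-1) x2)) as [e|hanti]; [|rewrite Rapp_isometry by exact hanti; lra].
  unfold Rapp; destruct (vec3_eq_dec x1 x2); [lra|].
  destruct (vec3_eq_dec x1 (vscal (-1) x2)); [|contradiction].
  rewrite vdot_zerol; apply vdot_ge0.
Qed.

End Rotation.

Lemma vdot_Rapp x1 x2 w :
  exists e, 0 <= e <= 1 + vdot x2 x2 /\ vdot x2 (Rapp x1 x2 w) = e * vdot x1 w.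
Proof.
  pose proof (vdot_ge0 x2); unfold Rapp; destruct (vec3_eq_dec x1 x2) as [<-|_].
  - exists 1; split; [lra|ring].
  - destruct (vec3_eq_dec x1 (vscal (-1) x2)) as [_|_].
    + exists 0; split; [lra|rewrite vdot_zeror; ring].
    + exists (vdot x2 x2); split; [lra|cbv zeta].
      rewrite !vdot_addr, vdot_subr, !vdot_scalr.
      replace (vdot x2 (vcross x1 x2)) with 0 by (unfold_vec; ring).
      rewrite (vdot_comm x2 x1); ring.
Qed.

(** * Calculus on the half-line *)

Lemma is_derive_Rplus (f g : R -> R) t df dg :
  is_derive f t df -> is_derive g t dg -> is_derive (fun s => f s + g s) t (df + dg).
Proof. intros; apply (is_derive_plus f g); auto. Qed.
Lemma is_derive_Rminus (f g : R -> R) t df dg :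
  is_derive f t df -> is_derive g t dg -> is_derive (fun s => f s - g s) t (df - dg).
Proof. intros; apply (is_derive_minus f g); auto. Qed.
Lemma is_derive_Rmult (f g : R -> R) t df dg :
  is_derive f t df -> is_derive g t dg -> is_derive (fun s => f s * g s) t (df * g t + f t * dg).
Proof. intros; apply (is_derive_mult f g); auto; intros; apply Rmult_comm. Qed.
Lemma is_derive_Rlinear k t : is_derive (fun u => k * u) t k.
Proof. pose proof (is_derive_scal (fun u => u) t k 1 (@is_derive_id R_AbsRing t)) as h; rewrite Rmult_1_r in h; exact h. Qed.
Lemma is_derive_rsum n (f : nat -> R -> R) d t : (forall k, (k < n)%nat -> is_derive (f k) t (d k)) ->
  is_derive (fun s => rsum n (fun k => f k s)) t (rsum n d).
Proof.
  induction n; intros H; simpl; [apply (is_derive_const 0)|].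
  apply is_derive_Rplus; [apply IHn; intros; apply H|apply H]; lia.
Qed.

Definition coord (p : vec3 -> R) : Prop := p = vx \/ p = vy \/ p = vz.

Lemma coord_vx : coord vx. Proof. left; reflexivity. Qed.
Lemma coord_vy : coord vy. Proof. right; left; reflexivity. Qed.
Lemma coord_vz : coord vz. Proof. right; right; reflexivity. Qed.
Lemma coord_vadd p a b : coord p -> p (vadd a b) = p a + p b.
Proof. intros [ -> | [ -> | -> ] ]; reflexivity. Qed.
Lemma coord_vsub p a b : coord p -> p (vsub a b) = p a - p b.
Proof. intros [ -> | [ -> | -> ] ]; reflexivity. Qed.
Lemma coord_vscal p c a : coord p -> p (vscal c a) = c * p a.
Proof. intros [ -> | [ -> | -> ] ]; reflexivity. Qed.
Lemma coord_vsum p n f : coord p -> p (vsum n f) = rsum n (fun k => p (f k)).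
Proof.
  intros hp; induction n; simpl; [destruct hp as [ -> | [ -> | -> ] ]; reflexivity|].
  rewrite coord_vadd, IHn by exact hp; reflexivity.
Qed.
Lemma coord_le_vnorm p a : coord p -> Rabs (p a) <= vnorm a.
Proof.
  intros hp; unfold vnorm; rewrite <- sqrt_Rsqr_abs; apply sqrt_le_1_alt.
  unfold Rsqr; destruct hp as [ -> | [ -> | -> ] ]; unfold_vec; nra.
Qed.

Lemma is_derive3_coord (f : R -> vec3) t d p : coord p -> is_derive3 f t d -> is_derive (fun s => p (f s)) t (p d).
Proof. intros [ -> | [ -> | -> ] ] [h1 [h2 h3]]; assumption. Qed.
Lemma is_derive3_sub f g t df dg :
  is_derive3 f t df -> is_derive3 g t dg -> is_derive3 (fun s => vsub (f s) (g s)) t (vsub df dg).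
Proof. intros [a1 [a2 a3]] [b1 [b2 b3]]; split; [|split]; apply is_derive_Rminus; assumption. Qed.
Lemma is_derive_vdot f g t df dg : is_derive3 f t df -> is_derive3 g t dg ->
  is_derive (fun s => vdot (f s) (g s)) t (vdot df (g t) + vdot (f t) dg).
Proof.
  intros [a1 [a2 a3]] [b1 [b2 b3]].
  pose proof (is_derive_Rplus _ _ _ _ _ (is_derive_Rplus _ _ _ _ _ (is_derive_Rmult _ _ _ _ _ a1 b1)
    (is_derive_Rmult _ _ _ _ _ a2 b2)) (is_derive_Rmult _ _ _ _ _ a3 b3)) as h.
  replace (vdot df (g t) + vdot (f t) dg) with (vx df * vx (g t) + vx (f t) * vx dg +
    (vy df * vy (g t) + vy (f t) * vy dg) + (vz df * vz (g t) + vz (f t) * vz dg)) by (unfold vdot; ring).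
  exact h.
Qed.

Definition right_cont (f : R -> R) (a : R) : Prop := filterlim f (at_right a) (locally (f a)).

Lemma right_cont_plus f g a : right_cont f a -> right_cont g a -> right_cont (fun s => f s + g s) a.
Proof.
  intros; apply (filterlim_comp_2 (G := locally (f a)) (H := locally (g a)) f g Rplus); auto.
  apply (filterlim_plus (f a) (g a)).
Qed.
Lemma right_cont_mult f g a : right_cont f a -> right_cont g a -> right_cont (fun s => f s * g s) a.
Proof.
  intros; apply (filterlim_comp_2 (G := locally (f a)) (H := locally (g a)) f g Rmult); auto.
  apply (filterlim_mult (f a) (g a)).
Qed.
Lemma right_cont_const c a : right_cont (fun _ => c) a.
Proof. apply filterlim_const. Qed.
Lemma right_cont_opp f a : right_cont f a -> right_cont (fun s => - f s) a.
Proof.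
  intros h; pose proof (right_cont_mult (fun _ => -1) f a (right_cont_const _ _) h) as h'.
  unfold right_cont in *; replace (- f a) with (-1 * f a) by ring.
  eapply filterlim_ext; [|exact h']; intros; simpl; ring.
Qed.
Lemma right_cont_ext f g a : (forall s, f s = g s) -> right_cont f a -> right_cont g a.
Proof. intros H hf; unfold right_cont; rewrite <- H; eapply filterlim_ext; eauto. Qed.
Lemma right_cont_rsum n (f : nat -> R -> R) a :
  (forall k, (k < n)%nat -> right_cont (f k) a) -> right_cont (fun s => rsum n (fun k => f k s)) a.
Proof.
  induction n; intros H; simpl; [apply right_cont_const|].
  apply right_cont_plus; [apply IHn; intros; apply H|apply H]; lia.
Qed.

Lemma continuity_pt_of_derive f a d : is_derive f a d -> continuity_pt f a.
Proof. intros H; apply continuity_pt_filterlim, (ex_derive_continuous f a); exists d; exact H. Qed.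

Lemma right_cont_of_derive f a d : is_derive f a d -> right_cont f a.
Proof.
  intros H; apply continuity_pt_of_derive, continuity_pt_filterlim in H.
  intros P HP; apply H in HP; unfold filtermap, at_right, within in *.
  eapply filter_imp; [|exact HP]; simpl; auto.
Qed.

Lemma right_cont_eps f a : right_cont f a ->
  forall eps, 0 < eps -> exists d, 0 < d /\ forall s, a < s < a + d -> Rabs (f s - f a) < eps.
Proof.
  intros H eps He; apply filterlim_locally with (eps := mkposreal eps He) in H.
  destruct H as [d Hd]; exists d; split; [apply cond_pos|intros s Hs].
  assert (hb : ball a d s).
  { unfold ball; simpl; unfold AbsRing_ball, abs, minus, plus, opp; simpl; rewrite Rabs_right; lra. }
  exact (Hd s hb ltac:(lra)).
Qed.

Lemma right_cont_vdot f g t : right_cont3 f t -> right_cont3 g t -> right_cont (fun s => vdot (f s) (g s)) t.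
Proof. intros [f1 [f2 f3]] [g1 [g2 g3]]; repeat apply right_cont_plus; apply right_cont_mult; assumption. Qed.
Lemma right_cont3_sub f g t : right_cont3 f t -> right_cont3 g t -> right_cont3 (fun s => vsub (f s) (g s)) t.
Proof.
  intros [f1 [f2 f3]] [g1 [g2 g3]]; split; [|split];
    apply right_cont_plus; try apply right_cont_opp; assumption.
Qed.
Lemma right_cont3_of_derive3 f t d : is_derive3 f t d -> right_cont3 f t.
Proof. intros [h1 [h2 h3]]; split; [|split]; eapply right_cont_of_derive; eassumption. Qed.

Lemma nonincreasing_of_derive_nonpos f df a b : a < b -> right_cont f a ->
  (forall s, a < s <= b -> is_derive f s (df s)) -> (forall s, a < s <= b -> df s <= 0) -> f b <= f a.
Proof.
  intros hab hrc hd hneg; destruct (Rle_lt_dec (f b) (f a)) as [|hlt]; [assumption|exfalso].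
  destruct (right_cont_eps f a hrc (f b - f a) ltac:(lra)) as [d [hd0 hdd]].
  set (s0 := Rmin (a + d / 2) ((a + b) / 2)).
  assert (hs0 : a < s0 < b /\ s0 < a + d) by (unfold s0, Rmin; destruct (Rle_dec _ _); lra).
  specialize (hdd s0 ltac:(lra)); apply Rabs_def2 in hdd.
  destruct (MVT_gen f s0 b df) as [c [hc e]].
  - intros y; rewrite Rmin_left, Rmax_right by lra; intros; apply hd; lra.
  - intros y; rewrite Rmin_left, Rmax_right by lra; intros; eapply continuity_pt_of_derive, hd; lra.
  - rewrite Rmin_left, Rmax_right in hc by lra; pose proof (hneg c ltac:(lra)).
    assert (df c * (b - s0) <= 0) by (apply Rmult_le_0_r; lra); lra.
Qed.

Lemma gronwall_zero f df K a b : a < b -> right_cont f a -> f a = 0 ->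
  (forall s, a < s <= b -> is_derive f s (df s) /\ df s <= K * f s) -> f b <= 0.
Proof.
  intros hab hrc hfa hd.
  assert (hexp : forall u, is_derive (fun u => exp (- K * u)) u (- K * exp (- K * u)))
    by (intros; auto_derive; [auto|ring]).
  pose proof (nonincreasing_of_derive_nonpos (fun u => f u * exp (- K * u))
    (fun u => df u * exp (- K * u) + f u * (- K * exp (- K * u))) a b hab
    ltac:(apply right_cont_mult; [exact hrc|eapply right_cont_of_derive, hexp])
    ltac:(intros s hs; apply (is_derive_Rmult f (fun u => exp (- K * u))); [apply hd, hs|apply hexp])
    ltac:(intros s hs; destruct (hd s hs) as [_ h]; pose proof (exp_pos (- K * s)); nra)) as hm.
  simpl in hm; rewrite hfa, Rmult_0_l in hm; pose proof (exp_pos (- K * b)); nra.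
Qed.

Lemma right_nbhd_forall_lt (N : nat) (T : R) (P : nat -> R -> Prop) :
  (forall i, (i < N)%nat -> exists d, 0 < d /\ forall s, T < s < T + d -> P i s) ->
  exists d, 0 < d /\ forall s, T < s < T + d -> forall i, (i < N)%nat -> P i s.
Proof.
  induction N; intros H; [exists 1; split; [lra|intros; lia]|].
  destruct IHN as [d1 [hd1 H1]]; [intros; apply H; lia|].
  destruct (H N ltac:(lia)) as [d2 [hd2 H2]].
  exists (Rmin d1 d2); split; [apply Rmin_glb_lt; assumption|].
  intros s hs i hi; pose proof (Rmin_l d1 d2); pose proof (Rmin_r d1 d2).
  destruct (Nat.eq_dec i N) as [->|]; [apply H2; lra|apply H1; [lra|lia]].
Qed.

Lemma left_const_continuity f T c : continuity_pt f T -> 0 < T -> (forall u, 0 <= u < T -> f u = c) -> f T = c.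
Proof.
  intros hc hT hu; destruct (Req_dec (f T) c) as [|hne]; [assumption|exfalso].
  destruct (hc (Rabs (f T - c))) as [d [hd hdd]]; [apply Rabs_pos_lt; lra|].
  set (u := Rmax 0 (T - d / 2)).
  assert (hu' : 0 <= u < T /\ Rabs (u - T) < d)
    by (unfold u, Rmax; destruct (Rle_dec 0 (T - d/2)); split; try lra; rewrite Rabs_left; lra).
  assert (huT : u <> T) by lra.
  specialize (hdd u (conj (conj I (not_eq_sym huT)) (proj2 hu'))); simpl in hdd; unfold R_dist in hdd.
  rewrite hu, <- Rabs_Ropp in hdd by lra; replace (- (c - f T)) with (f T - c) in hdd by ring; lra.
Qed.

Lemma continuous_induction (P : R -> Prop) :
  (forall T, 0 <= T -> (forall u, 0 <= u < T -> P u) -> P T) ->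
  (forall T, 0 <= T -> (forall u, 0 <= u <= T -> P u) ->
     exists eta, 0 < eta /\ forall s, T < s < T + eta -> P s) ->
  forall t, 0 <= t -> P t.
Proof.
  intros hclosed hopen t1 ht1; apply NNPP; intros hnt1.
  set (U := fun s => 0 <= s /\ forall u, 0 <= u <= s -> P u).
  assert (hP0 : P 0) by (apply hclosed; [lra|intros; lra]).
  assert (hU0 : U 0) by (split; [lra|intros u hu; replace u with 0 by lra; exact hP0]).
  assert (hUb : is_upper_bound U t1).
  { intros s [hs0 hsu]; destruct (Rle_lt_dec s t1) as [|hlt]; [assumption|].
    exfalso; apply hnt1, hsu; lra. }
  destruct (completeness U) as [T [hT1 hT2]]; [exists t1; exact hUb|exists 0; exact hU0|].
  assert (hT0 : 0 <= T) by (apply hT1, hU0).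
  assert (hbelow : forall u, 0 <= u < T -> P u).
  { intros u hu; apply NNPP; intros hn.
    assert (is_upper_bound U u).
    { intros s [hs0 hsu]; destruct (Rle_lt_dec s u) as [|hlt]; [assumption|].
      exfalso; apply hn, hsu; lra. }
    specialize (hT2 u H); lra. }
  assert (hupto : forall u, 0 <= u <= T -> P u).
  { intros u hu; destruct (Rle_lt_or_eq_dec u T (proj2 hu)) as [hlt|heq]; [apply hbelow; lra|subst u].
    apply hclosed; assumption. }
  destruct (hopen T hT0 hupto) as [eta [heta Heta]].
  assert (hUT : U (T + eta / 2)).
  { split; [lra|intros u hu]; destruct (Rle_lt_dec u T); [apply hupto; lra|apply Heta; lra]. }
  specialize (hT1 _ hUT); lra.
Qed.

Lemma const_of_derive_zero f a b : a < b -> right_cont f a -> (forall s, a < s <= b -> is_derive f s 0) -> f b = f a.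
Proof.
  intros hab hrc hd; apply Rle_antisym.
  - apply (nonincreasing_of_derive_nonpos f (fun _ => 0) a b hab hrc hd); intros; lra.
  - assert (hopp : forall s, a < s <= b -> is_derive (fun u => - f u) s 0).
    { intros s hs; replace 0 with (opp 0) by (compute; ring); apply (is_derive_opp f), hd, hs. }
    pose proof (nonincreasing_of_derive_nonpos (fun u => - f u) (fun _ => 0) a b hab
      (right_cont_opp f a hrc) hopp ltac:(intros; lra)); lra.
Qed.

Definition derive_bounded_by (g : R -> R) (L : R) : Prop :=
  forall t, 0 < t -> exists d, is_derive g t d /\ Rabs d <= L.

Lemma derive_bounded_by_lower g L t s : derive_bounded_by g L -> 0 < t -> t <= s -> g t - L * (s - t) <= g s.
Proof.
  intros hL ht hts; destruct (Rle_lt_or_eq_dec t s hts) as [hlt|<-]; [|lra].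
  assert (hd : forall u, 0 < u -> is_derive (fun u => - g u + (- L) * u) u (- Derive g u + - L) /\ - Derive g u + - L <= 0).
  { intros u hu; destruct (hL u hu) as [d [hd hdl]]; rewrite (is_derive_unique g u d hd); split.
    - apply (is_derive_Rplus (fun u => - g u) (fun u => (- L) * u));
        [apply (is_derive_opp g); exact hd|apply is_derive_Rlinear].
    - pose proof (Rle_abs (- d)) as h; rewrite Rabs_Ropp in h; lra. }
  pose proof (nonincreasing_of_derive_nonpos _ _ t s hlt
    (right_cont_of_derive _ _ _ (proj1 (hd t ht)))
    (fun u hu => proj1 (hd u ltac:(lra))) (fun u hu => proj2 (hd u ltac:(lra)))) as h.
  simpl in h; lra.
Qed.

(* Each excursion of g above eps costs E a fixed amount, while E stays nonnegative. *)
Lemma barbalat (E dE g : R -> R) c L :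
  0 < c -> (forall t, 0 < t -> is_derive E t (dE t)) -> (forall t, 0 < t -> dE t <= - c * g t) ->
  (forall t, 0 < t -> 0 <= g t) -> (forall t, 0 < t -> 0 <= E t) -> derive_bounded_by g L ->
  forall eps, 0 < eps -> exists M, forall t, M < t -> g t < eps.
Proof.
  intros hc hE hdE hg hE0 hL eps heps; apply NNPP; intros hn.
  assert (hbig : forall M, exists t, M < t /\ eps <= g t).
  { intros M; apply NNPP; intros h; apply hn; exists M; intros t ht; apply NNPP; intros h2.
    apply h; exists t; split; [assumption|lra]. }
  assert (hL0 : 0 <= L) by (destruct (hL 1 ltac:(lra)) as [d [_ hd]]; pose proof (Rabs_pos d); lra).
  set (del := eps / (2 * (L + 1))).
  assert (hdel : 0 < del) by (apply Rdiv_lt_0_compat; lra).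
  assert (hLdel : L * del <= eps / 2).
  { unfold del; apply (Rmult_le_reg_r (2 * (L + 1))); [lra|].
    replace (L * (eps / (2 * (L + 1))) * (2 * (L + 1))) with (L * eps) by (field; lra); nra. }
  set (kap := c * (eps / 2) * del).
  assert (hkap : 0 < kap) by (apply Rmult_lt_0_compat; [apply Rmult_lt_0_compat|]; lra).
  assert (hmono : forall a b, 0 < a -> a < b -> E b <= E a).
  { intros a b ha hab; apply (nonincreasing_of_derive_nonpos E dE a b hab);
      [eapply right_cont_of_derive, hE, ha|intros; apply hE; lra|].
    intros s hs; pose proof (hdE s ltac:(lra)); pose proof (hg s ltac:(lra)); nra. }
  assert (hstep : forall t, 0 < t -> eps <= g t -> E (t + del) <= E t - kap).
  { intros t ht hgt.
    assert (hd : forall u, t < u <= t + del -> is_derive (fun u => E u + (c * (eps / 2)) * u) u (dE u + c * (eps / 2))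
                                         /\ dE u + c * (eps / 2) <= 0).
    { intros u hu; split; [apply is_derive_Rplus; [apply hE; lra|apply is_derive_Rlinear]|].
      pose proof (derive_bounded_by_lower g L t u hL ht ltac:(lra)).
      pose proof (hdE u ltac:(lra)); assert (L * (u - t) <= L * del) by (apply Rmult_le_compat_l; lra); nra. }
    pose proof (nonincreasing_of_derive_nonpos (fun u => E u + (c * (eps / 2)) * u) _ t (t + del) ltac:(lra)
      ltac:(eapply right_cont_of_derive; apply is_derive_Rplus; [apply hE, ht|apply is_derive_Rlinear])
      (fun u hu => proj1 (hd u hu)) (fun u hu => proj2 (hd u hu))) as h.
    simpl in h; unfold kap; lra. }
  assert (hind : forall k : nat, exists t, 1 <= t /\ E t <= E 1 - INR k * kap).
  { induction k as [|k [t [ht1 ht2]]]; [exists 1; simpl; lra|].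
    destruct (hbig t) as [t' [ht' hg']]; exists (t' + del); split; [lra|].
    pose proof (hstep t' ltac:(lra) hg'); pose proof (hmono t t' ltac:(lra) ht'); rewrite S_INR; lra. }
  destruct (INR_archimed kap (E 1) hkap) as [k hk].
  destruct (hind k) as [t [ht1 ht2]]; pose proof (hE0 t ltac:(lra)); lra.
Qed.

Lemma is_lim_zero_of_sqrt_bound (f g : R -> R) c : 0 <= c ->
  (forall t, 0 < t -> 0 <= f t <= c * sqrt (g t)) ->
  (forall eps, 0 < eps -> exists M, forall t, M < t -> g t < eps) -> is_lim f p_infty 0.
Proof.
  intros hc hfg hg; apply is_lim_spec; intros eps; pose proof (cond_pos eps) as he.
  set (e := eps / (c + 1)).
  assert (he' : 0 < e) by (apply Rdiv_lt_0_compat; lra).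
  assert (hce : c * e < eps) by (unfold e; apply (Rmult_lt_reg_r (c + 1)); [lra|]; field_simplify; nra).
  destruct (hg (e ^ 2) ltac:(nra)) as [M hM]; exists (Rmax M 1); intros t ht.
  pose proof (Rmax_l M 1); pose proof (Rmax_r M 1); destruct (hfg t ltac:(lra)) as [hf0 hf1].
  assert (hsq : sqrt (g t) < e).
  { destruct (Rle_lt_dec (g t) 0) as [hneg|hpos]; [rewrite sqrt_neg_0 by exact hneg; exact he'|].
    rewrite <- (sqrt_pow2 e) by lra; apply sqrt_lt_1_alt; split; [lra|apply hM; lra]. }
  rewrite Rminus_0_r, Rabs_right by lra; simpl; nra.
Qed.

(** * Bounded functions with bounded derivative *)

Definition bdd_with_bdd_derive (f : R -> R) : Prop :=
  (exists M, forall t, 0 < t -> Rabs (f t) <= M) /\ exists L, derive_bounded_by f L.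

Definition bdd_with_bdd_derive3 (f : R -> vec3) : Prop :=
  forall p, coord p -> bdd_with_bdd_derive (fun t => p (f t)).

Lemma bdd_with_bdd_derive_const c : bdd_with_bdd_derive (fun _ => c).
Proof.
  split; [exists (Rabs c); intros; lra|exists 0; intros t _; exists 0].
  split; [apply (is_derive_const c)|rewrite Rabs_R0; lra].
Qed.

Lemma bdd_with_bdd_derive_plus f g :
  bdd_with_bdd_derive f -> bdd_with_bdd_derive g -> bdd_with_bdd_derive (fun t => f t + g t).
Proof.
  intros [[M1 h1] [L1 d1]] [[M2 h2] [L2 d2]]; split.
  - exists (M1 + M2); intros t ht; eapply Rle_trans; [apply Rabs_triang|].
    specialize (h1 t ht); specialize (h2 t ht); lra.
  - exists (L1 + L2); intros t ht; destruct (d1 t ht) as [a [ha hal]], (d2 t ht) as [b [hb hbl]].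
    exists (a + b); split; [apply is_derive_Rplus; assumption|].
    eapply Rle_trans; [apply Rabs_triang|lra].
Qed.

Lemma bdd_with_bdd_derive_mult f g :
  bdd_with_bdd_derive f -> bdd_with_bdd_derive g -> bdd_with_bdd_derive (fun t => f t * g t).
Proof.
  intros [[M1 h1] [L1 d1]] [[M2 h2] [L2 d2]]; split.
  - exists (M1 * M2); intros t ht; rewrite Rabs_mult.
    apply Rmult_le_compat; auto; apply Rabs_pos.
  - exists (L1 * M2 + M1 * L2); intros t ht; destruct (d1 t ht) as [a [ha hal]], (d2 t ht) as [b [hb hbl]].
    exists (a * g t + f t * b); split; [apply is_derive_Rmult; assumption|].
    eapply Rle_trans; [apply Rabs_triang|rewrite !Rabs_mult].
    specialize (h1 t ht); specialize (h2 t ht).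
    pose proof (Rabs_pos a); pose proof (Rabs_pos b); pose proof (Rabs_pos (f t)); pose proof (Rabs_pos (g t)).
    apply Rplus_le_compat; apply Rmult_le_compat; assumption.
Qed.

Lemma bdd_with_bdd_derive_minus f g :
  bdd_with_bdd_derive f -> bdd_with_bdd_derive g -> bdd_with_bdd_derive (fun t => f t - g t).
Proof.
  intros hf hg; pose proof (bdd_with_bdd_derive_plus _ _ hf
    (bdd_with_bdd_derive_mult _ _ (bdd_with_bdd_derive_const (-1)) hg)) as [[M h] [L d]].
  split; [exists M|exists L]; intros t ht.
  - specialize (h t ht); simpl in h; replace (f t - g t) with (f t + -1 * g t) by ring; exact h.
  - destruct (d t ht) as [a [ha hl]]; exists a; split; [|exact hl].
    eapply is_derive_ext; [|exact ha]; intros; simpl; ring.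
Qed.

Lemma bdd_with_bdd_derive_inv f m : bdd_with_bdd_derive f -> 0 < m -> (forall t, 0 < t -> m <= f t) ->
  bdd_with_bdd_derive (fun t => / f t).
Proof.
  intros [_ [L1 d1]] hm hf; split.
  - exists (/ m); intros t ht; specialize (hf t ht).
    rewrite Rabs_right by (apply Rle_ge, Rlt_le, Rinv_0_lt_compat; lra).
    apply Rinv_le_contravar; assumption.
  - exists (L1 / m ^ 2); intros t ht; destruct (d1 t ht) as [a [ha hal]]; specialize (hf t ht).
    exists (- a / f t ^ 2); split; [apply is_derive_inv; [exact ha|lra]|].
    assert (hpos : 0 < / f t ^ 2) by (apply Rinv_0_lt_compat, pow_lt; lra).
    unfold Rdiv; rewrite Rabs_mult, Rabs_Ropp, (Rabs_right (/ f t ^ 2)) by lra.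
    apply Rmult_le_compat; [apply Rabs_pos|lra|exact hal|].
    apply Rinv_le_contravar; [apply pow_lt; lra|apply pow_incr; lra].
Qed.

Lemma bdd_with_bdd_derive_rsum n (f : nat -> R -> R) :
  (forall k, (k < n)%nat -> bdd_with_bdd_derive (f k)) -> bdd_with_bdd_derive (fun t => rsum n (fun k => f k t)).
Proof.
  induction n; intros H; simpl; [apply bdd_with_bdd_derive_const|].
  apply (bdd_with_bdd_derive_plus (fun t => rsum n (fun k => f k t)) (f n)); [apply IHn; intros|]; apply H; lia.
Qed.

Section BoundedCurves.
Variables f g : R -> vec3.
Hypotheses (hf : bdd_with_bdd_derive3 f) (hg : bdd_with_bdd_derive3 g).

Lemma bdd_with_bdd_derive3_add : bdd_with_bdd_derive3 (fun t => vadd (f t) (g t)).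
Proof. intros p [ -> | [ -> | -> ] ]; apply bdd_with_bdd_derive_plus; auto using coord_vx, coord_vy, coord_vz. Qed.
Lemma bdd_with_bdd_derive3_sub : bdd_with_bdd_derive3 (fun t => vsub (f t) (g t)).
Proof. intros p [ -> | [ -> | -> ] ]; apply bdd_with_bdd_derive_minus; auto using coord_vx, coord_vy, coord_vz. Qed.
Lemma bdd_with_bdd_derive3_scal c : bdd_with_bdd_derive c -> bdd_with_bdd_derive3 (fun t => vscal (c t) (f t)).
Proof. intros hc p [ -> | [ -> | -> ] ]; apply bdd_with_bdd_derive_mult; auto using coord_vx, coord_vy, coord_vz. Qed.
Lemma bdd_with_bdd_derive3_cross : bdd_with_bdd_derive3 (fun t => vcross (f t) (g t)).
Proof.
  pose proof (hf _ coord_vx); pose proof (hf _ coord_vy); pose proof (hf _ coord_vz).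
  pose proof (hg _ coord_vx); pose proof (hg _ coord_vy); pose proof (hg _ coord_vz).
  intros p [ -> | [ -> | -> ] ]; apply bdd_with_bdd_derive_minus; apply bdd_with_bdd_derive_mult; assumption.
Qed.
Lemma bdd_with_bdd_derive_vdot : bdd_with_bdd_derive (fun t => vdot (f t) (g t)).
Proof.
  pose proof (hf _ coord_vx); pose proof (hf _ coord_vy); pose proof (hf _ coord_vz).
  pose proof (hg _ coord_vx); pose proof (hg _ coord_vy); pose proof (hg _ coord_vz).
  unfold vdot; repeat apply bdd_with_bdd_derive_plus; apply bdd_with_bdd_derive_mult; assumption.
Qed.

End BoundedCurves.

Lemma bdd_with_bdd_derive3_rodrigues x1 x2 w :
  bdd_with_bdd_derive3 x1 -> bdd_with_bdd_derive3 x2 -> bdd_with_bdd_derive3 w ->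
  (exists m, 0 < m /\ forall t, 0 < t -> m <= 1 + vdot (x1 t) (x2 t)) ->
  bdd_with_bdd_derive3 (fun t => rodrigues (x1 t) (x2 t) (w t)).
Proof.
  intros h1 h2 hw [m [hm hmt]].
  pose proof (bdd_with_bdd_derive3_cross _ _ h1 h2) as hk.
  unfold rodrigues; apply bdd_with_bdd_derive3_add; [apply bdd_with_bdd_derive3_add|].
  - apply bdd_with_bdd_derive3_scal; [exact hw|apply bdd_with_bdd_derive_vdot; assumption].
  - apply bdd_with_bdd_derive3_cross; assumption.
  - apply bdd_with_bdd_derive3_scal; [exact hk|unfold Rdiv; apply bdd_with_bdd_derive_mult].
    + apply bdd_with_bdd_derive_vdot; assumption.
    + apply (bdd_with_bdd_derive_inv (fun t => 1 + vdot (x1 t) (x2 t)) m); [|exact hm|exact hmt].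
      apply bdd_with_bdd_derive_plus; [apply bdd_with_bdd_derive_const|apply bdd_with_bdd_derive_vdot; assumption].
Qed.

(** * The flocking system *)

Lemma psi_range psi r : admissible_psi psi -> 0 <= r <= 2 -> 0 <= psi r <= psi 0.
Proof. intros [hpos [hdec _]] hr; split; [apply hpos|apply hdec]; unfold in02; lra. Qed.

(* 3/2 exceeds sqrt 2, the eventual bound on the distances between particles. *)
Lemma psi_pos_below_2 psi : admissible_psi psi -> exists r, 3/2 <= r < 2 /\ 0 < psi r.
Proof.
  intros [_ [_ [[dpsi [hd [_ hneg]]] h2]]].
  specialize (hd 2 ltac:(unfold in02; lra)); unfold deriv_within02 in hd.
  apply filterlim_locally with (eps := mkposreal (- dpsi 2 / 2) ltac:(lra)) in hd.
  destruct hd as [d Hd]; simpl in Hd.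
  set (h := - Rmin (d / 2) (1 / 2)).
  assert (hh : - (1/2) <= h < 0 /\ - h < d).
  { pose proof (Rmin_l (d/2) (1/2)); pose proof (Rmin_r (d/2) (1/2)); pose proof (cond_pos d).
    assert (0 < Rmin (d/2) (1/2)) by (apply Rmin_glb_lt; lra); unfold h; lra. }
  assert (hball : ball 0 d h).
  { unfold ball; simpl; unfold AbsRing_ball, abs, minus, plus, opp; simpl; rewrite Ropp_0, Rplus_0_r, Rabs_left; lra. }
  assert (hne : h <> 0) by (apply Rlt_not_eq; lra).
  assert (hin : in02 (2 + h)) by (unfold in02; lra).
  specialize (Hd h hball (conj hne hin)).
  unfold ball in Hd; simpl in Hd; unfold AbsRing_ball, abs, minus, plus, opp in Hd; simpl in Hd.
  apply Rabs_def2 in Hd; destruct Hd as [Hd _].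
  exists (2 + h); split; [lra|].
  rewrite h2 in Hd; unfold Rdiv in Hd.
  assert (/ h < 0) by (apply Rinv_lt_0_compat; lra); nra.
Qed.

Section Flocking.

Variables (N : nat) (sigma : R) (psi : R -> R) (x v : nat -> R -> vec3).

Definition energy_at t := energy N sigma (fun k => x k t) (fun k => v k t).
Definition accel t i := vel_rhs N sigma psi (fun j => x j t) (fun j => v j t) i.
Definition psi_at t i j := psi (vnorm (vsub (x i t) (x j t))).
Definition misalign t i j := vsub (Rapp (x j t) (x i t) (v j t)) (v i t).
Definition tangent_at t :=
  forall i, (i < N)%nat -> vdot (x i t) (x i t) = 1 /\ vdot (x i t) (v i t) = 0.

Hypothesis hN : (1 <= N)%nat.
Hypothesis hsigma : 0 < sigma.
Hypothesis hpsi : admissible_psi psi.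
Hypothesis hsol : is_solution N sigma psi x v.
Hypothesis hinit : forall i, (i < N)%nat -> vnorm (x i 0) = 1 /\ vdot (v i 0) (x i 0) = 0.
Hypothesis henergy : 2 * sigma > INR N ^ 2 * energy_at 0.

Let hNpos : 0 < INR N.
Proof. apply lt_0_INR; lia. Qed.

Lemma x_is_derive i t : (i < N)%nat -> 0 < t -> is_derive3 (x i) t (v i t).
Proof. intros hi ht; apply (hsol i hi), ht. Qed.
Lemma v_is_derive i t : (i < N)%nat -> 0 < t -> is_derive3 (v i) t (accel t i).
Proof. intros hi ht; apply (hsol i hi), ht. Qed.

Lemma x_right_cont i t : (i < N)%nat -> 0 <= t -> right_cont3 (x i) t.
Proof.
  intros hi ht; destruct (Rle_lt_or_eq_dec 0 t ht) as [hlt|<-];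
    [eapply right_cont3_of_derive3, x_is_derive|apply (hsol i hi)]; assumption.
Qed.
Lemma v_right_cont i t : (i < N)%nat -> 0 <= t -> right_cont3 (v i) t.
Proof.
  intros hi ht; destruct (Rle_lt_or_eq_dec 0 t ht) as [hlt|<-];
    [eapply right_cont3_of_derive3, v_is_derive|apply (hsol i hi)]; assumption.
Qed.

Lemma energy_at_vdot t : energy_at t =
  / INR N * rsum N (fun k => vdot (v k t) (v k t)) +
  sigma / (2 * INR N ^ 2) * rsum2 N (fun k l => vdot (vsub (x k t) (x l t)) (vsub (x k t) (x l t))).
Proof.
  unfold energy_at, energy; f_equal; f_equal; [|f_equal];
    apply rsum_ext; intros; [|apply rsum_ext; intros]; apply vnorm_sq.
Qed.

Lemma energy_at_nonneg t : 0 <= energy_at t.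
Proof.
  rewrite energy_at_vdot; apply Rplus_le_le_0_compat; apply Rmult_le_pos.
  - apply Rlt_le, Rinv_0_lt_compat, hNpos.
  - apply rsum_nonneg; intros; apply vdot_ge0.
  - apply Rlt_le, Rdiv_lt_0_compat; [|pose proof hNpos]; nra.
  - apply rsum2_nonneg; intros; apply vdot_ge0.
Qed.

Lemma energy_at_right_cont t : 0 <= t -> right_cont energy_at t.
Proof.
  intros ht; eapply right_cont_ext; [intros; symmetry; apply energy_at_vdot|].
  apply right_cont_plus; apply right_cont_mult; try apply right_cont_const.
  - apply right_cont_rsum; intros; apply right_cont_vdot; apply v_right_cont; assumption.
  - apply right_cont_rsum; intros; apply right_cont_rsum; intros.
    apply right_cont_vdot; apply right_cont3_sub; apply x_right_cont; assumption.
Qed.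

Definition energy_rate t :=
  / INR N * rsum N (fun k => 2 * vdot (v k t) (accel t k)) +
  sigma / (2 * INR N ^ 2) * rsum2 N (fun k l => 2 * vdot (vsub (x k t) (x l t)) (vsub (v k t) (v l t))).

Lemma energy_at_is_derive t : 0 < t -> is_derive energy_at t (energy_rate t).
Proof.
  intros ht.
  assert (hx : forall k, (k < N)%nat -> is_derive3 (x k) t (v k t)) by (intros; apply x_is_derive; assumption).
  assert (hv : forall k, (k < N)%nat -> is_derive3 (v k) t (accel t k)) by (intros; apply v_is_derive; assumption).
  eapply is_derive_ext; [intros s; symmetry; apply energy_at_vdot|].
  assert (hkin := is_derive_Rmult (fun _ => / INR N) _ t _ _ (is_derive_const (/ INR N) t)
     (is_derive_rsum N (fun k s => vdot (v k s) (v k s)) _ t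
        (fun k hk => is_derive_vdot _ _ _ _ _ (hv k hk) (hv k hk)))).
  assert (hpot := is_derive_Rmult (fun _ => sigma / (2 * INR N ^ 2)) _ t _ _ (is_derive_const _ t)
     (is_derive_rsum N (fun k s => rsum N (fun l => vdot (vsub (x k s) (x l s)) (vsub (x k s) (x l s)))) _ t
        (fun k hk => is_derive_rsum N (fun l s => vdot (vsub (x k s) (x l s)) (vsub (x k s) (x l s))) _ t
          (fun l hl => is_derive_vdot _ _ _ _ _ (is_derive3_sub _ _ _ _ _ (hx k hk) (hx l hl))
                                               (is_derive3_sub _ _ _ _ _ (hx k hk) (hx l hl)))))).
  pose proof (is_derive_Rplus _ _ _ _ _ hkin hpot) as h; simpl in h.
  replace (energy_rate t) with (0 * rsum N (fun k => vdot (v k t) (v k t)) +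
      / INR N * rsum N (fun k => vdot (accel t k) (v k t) + vdot (v k t) (accel t k)) +
      (0 * rsum2 N (fun k l => vdot (vsub (x k t) (x l t)) (vsub (x k t) (x l t))) +
       sigma / (2 * INR N ^ 2) *
       rsum2 N (fun k l => vdot (vsub (v k t) (v l t)) (vsub (x k t) (x l t)) +
                           vdot (vsub (x k t) (x l t)) (vsub (v k t) (v l t))))); [exact h|].
  unfold energy_rate, rsum2; ring_simplify; f_equal; f_equal.
  - apply rsum_ext; intros; rewrite vdot_comm; ring.
  - apply rsum_ext; intros; apply rsum_ext; intros; rewrite (vdot_comm (vsub (v _ t) _)); ring.
Qed.

Lemma vdot_v_accel t k : tangent_at t -> (k < N)%nat ->
  vdot (v k t) (accel t k) =
  rsum N (fun j => psi_at t k j / INR N * (vdot (v k t) (Rapp (x j t) (x k t) (v j t)) - vdot (v k t) (v k t)))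
  + sigma / INR N * rsum N (fun l => vdot (v k t) (x l t)).
Proof.
  intros hI hk; destruct (hI k hk) as [h1 h2].
  unfold accel, vel_rhs; rewrite !vdot_addr, vdot_scalr, !vdot_vsum.
  rewrite (vdot_comm (v k t) (x k t)), h2, Rmult_0_r, Rplus_0_l, <- rsum_scal; f_equal.
  - apply rsum_ext; intros; rewrite vdot_scalr, vdot_subr; reflexivity.
  - apply rsum_ext; intros; rewrite vdot_scalr, vdot_subr, !vdot_scalr, vnorm_sq, h1.
    rewrite (vdot_comm (v k t) (x k t)), h2; ring.
Qed.

(* psi(2) = 0 is what makes the convention R(x,-x) v := 0 harmless. *)
Lemma psi_misalign_sq t k j : tangent_at t -> (k < N)%nat -> (j < N)%nat ->
  psi_at t k j * vdot (misalign t k j) (misalign t k j) =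
  psi_at t k j * vdot (v j t) (v j t) - 2 * (psi_at t k j * vdot (v k t) (Rapp (x j t) (x k t) (v j t)))
  + psi_at t k j * vdot (v k t) (v k t).
Proof.
  intros hI hk hj; destruct (hI k hk) as [hk1 _], (hI j hj) as [hj1 _].
  unfold misalign; rewrite vdot_subl, !vdot_subr, (vdot_comm (v k t) (Rapp _ _ _)).
  destruct (vec3_eq_dec (x j t) (vscal (-1) (x k t))) as [e|hanti]; [|rewrite Rapp_isometry by assumption; ring].
  replace (psi_at t k j) with 0; [ring|].
  unfold psi_at; rewrite e; destruct hpsi as [_ [_ [_ <-]]]; f_equal.
  unfold vnorm; replace (vdot _ _) with (2 * 2); [symmetry; apply sqrt_square; lra|].
  revert hk1; unfold_vec; intros; nra.
Qed.

Lemma energy_rate_dissipation t : tangent_at t ->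
  energy_rate t = - / INR N ^ 2 * rsum2 N (fun i j => psi_at t i j * vdot (misalign t i j) (misalign t i j)).
Proof.
  intros hI.
  set (P1 := rsum2 N (fun k j => psi_at t k j * vdot (v k t) (v k t))).
  set (P2 := rsum2 N (fun k j => psi_at t k j * vdot (v k t) (Rapp (x j t) (x k t) (v j t)))).
  set (B := rsum2 N (fun k l => vdot (v k t) (x l t))).
  assert (hkin : rsum N (fun k => 2 * vdot (v k t) (accel t k)) = 2 / INR N * (P2 - P1) + 2 * sigma / INR N * B).
  { transitivity (rsum2 N (fun k j => 2 / INR N * (psi_at t k j * vdot (v k t) (Rapp (x j t) (x k t) (v j t)))
      + (- (2 / INR N)) * (psi_at t k j * vdot (v k t) (v k t)) + 2 * sigma / INR N * vdot (v k t) (x j t))).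
    - apply rsum_ext; intros k hk; rewrite vdot_v_accel by assumption.
      rewrite <- (rsum_scal N (sigma / INR N)), <- rsum_plus, <- rsum_scal.
      apply rsum_ext; intros; unfold Rdiv; ring.
    - rewrite !rsum2_plus, !rsum2_scal; fold P1 P2 B; ring. }
  assert (hpot : rsum2 N (fun k l => 2 * vdot (vsub (x k t) (x l t)) (vsub (v k t) (v l t))) = -4 * B).
  { transitivity (rsum2 N (fun k l => (-2) * vdot (v l t) (x k t) + (-2) * vdot (v k t) (x l t))).
    - apply rsum2_ext; intros k l hk hl; destruct (hI k hk) as [_ a], (hI l hl) as [_ b].
      rewrite vdot_subl, !vdot_subr, a, b, (vdot_comm (x k t) (v l t)), (vdot_comm (x l t) (v k t)); ring.
    - rewrite rsum2_plus, !rsum2_scal, (rsum2_swap N (fun k l => vdot (v l t) (x k t))); unfold B; ring. }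
  assert (hdiss : rsum2 N (fun i j => psi_at t i j * vdot (misalign t i j) (misalign t i j)) = 2 * (P1 - P2)).
  { rewrite (rsum2_ext N _ (fun k j => psi_at t k j * vdot (v j t) (v j t) + (-2) * (psi_at t k j * vdot (v k t)
      (Rapp (x j t) (x k t) (v j t))) + psi_at t k j * vdot (v k t) (v k t)))
      by (intros; rewrite psi_misalign_sq by assumption; ring).
    rewrite !rsum2_plus, rsum2_scal, rsum2_swap; fold P1 P2.
    replace (rsum2 N (fun k l => psi_at t l k * vdot (v k t) (v k t))) with P1; [ring|].
    apply rsum2_ext; intros; unfold psi_at; rewrite vnorm_subC; reflexivity. }
  unfold energy_rate; rewrite hkin, hpot, hdiss; field; lra.
Qed.

Lemma psi_at_range t i j : vdot (vsub (x i t) (x j t)) (vsub (x i t) (x j t)) <= 4 -> 0 <= psi_at t i j <= psi 0.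
Proof.
  intros hd; apply psi_range; [exact hpsi|split; [apply vnorm_ge0|apply vnorm_le; lra]].
Qed.

Lemma energy_rate_nonpos t : tangent_at t -> energy_rate t <= 0.
Proof.
  intros hI; rewrite energy_rate_dissipation by exact hI.
  assert (0 <= rsum2 N (fun i j => psi_at t i j * vdot (misalign t i j) (misalign t i j))).
  { apply rsum2_nonneg; intros i j hi hj; apply Rmult_le_pos; [|apply vdot_ge0].
    apply psi_at_range, dist_unit_le2; [apply (hI i hi)|apply (hI j hj)]. }
  assert (0 < / INR N ^ 2) by (apply Rinv_0_lt_compat, pow_lt, hNpos); nra.
Qed.

Lemma energy_at_nonincreasing a b : 0 <= a -> a < b -> (forall s, a < s <= b -> tangent_at s) ->
  energy_at b <= energy_at a.
Proof.
  intros ha hab hI; apply (nonincreasing_of_derive_nonpos _ energy_rate a b hab).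
  - apply energy_at_right_cont, ha.
  - intros; apply energy_at_is_derive; lra.
  - intros s hs; apply energy_rate_nonpos, hI, hs.
Qed.

Lemma vdot_v_le_energy t i : (i < N)%nat -> vdot (v i t) (v i t) <= INR N * energy_at t.
Proof.
  intros hi; rewrite energy_at_vdot.
  pose proof (rsum_ge_term N (fun k => vdot (v k t) (v k t)) i (fun k _ => vdot_ge0 _) hi).
  pose proof (rsum2_nonneg N (fun k l => vdot (vsub (x k t) (x l t)) (vsub (x k t) (x l t))) (fun k l _ _ => vdot_ge0 _)).
  assert (0 <= INR N * (sigma / (2 * INR N ^ 2))) by (apply Rmult_le_pos, Rlt_le, Rdiv_lt_0_compat; nra).
  rewrite Rmult_plus_distr_l, <- Rmult_assoc, Rinv_r, Rmult_1_l, <- Rmult_assoc by lra; nra.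
Qed.

Lemma dist_le_energy t i j : (i < N)%nat -> (j < N)%nat ->
  vdot (vsub (x i t) (x j t)) (vsub (x i t) (x j t)) <= INR N ^ 2 * energy_at t / sigma.
Proof.
  intros hi hj; rewrite energy_at_vdot.
  set (d := fun k l => vdot (vsub (x k t) (x l t)) (vsub (x k t) (x l t))).
  assert (hd : d i j <= rsum2 N d / 2).
  { pose proof (rsum2_nonneg N d (fun k l _ _ => vdot_ge0 _)).
    destruct (Nat.eq_dec i j) as [<-|hij].
    - replace (d i i) with 0; [lra|unfold d; rewrite <- (vdot_zerol vzero); f_equal; apply vec3_ext; unfold_vec; ring].
    - pose proof (rsum2_ge_pair N d (fun k l _ _ => vdot_ge0 _) i j hi hj hij).
      assert (d j i = d i j) by (unfold d; unfold_vec; ring); lra. }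
  pose proof (rsum_nonneg N (fun k => vdot (v k t) (v k t)) (fun k _ => vdot_ge0 _)).
  fold d; apply (Rle_trans _ _ _ hd), (Rmult_le_reg_l sigma); [exact hsigma|].
  replace (sigma * (INR N ^ 2 * (/ INR N * rsum N (fun k => vdot (v k t) (v k t)) + sigma / (2 * INR N ^ 2) * rsum2 N d) / sigma))
    with (INR N * rsum N (fun k => vdot (v k t) (v k t)) + sigma * (rsum2 N d / 2)) by (field; lra).
  assert (0 <= INR N * rsum N (fun k => vdot (v k t) (v k t))) by (apply Rmult_le_pos; lra); lra.
Qed.

Definition radial t i := vdot (x i t) (v i t).
Definition radial_sq t := rsum N (fun i => radial t i * radial t i).

Definition near_sphere t :=
  (forall i, (i < N)%nat -> 1/2 < vdot (x i t) (x i t) < 2) /\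
  (forall i j, (i < N)%nat -> (j < N)%nat -> vdot (vsub (x i t) (x j t)) (vsub (x i t) (x j t)) < 4).

Lemma vdot_x_accel t i : vdot (x i t) (x i t) <> 0 ->
  vdot (x i t) (accel t i) = - vdot (v i t) (v i t) +
  rsum N (fun j => psi_at t i j / INR N * (vdot (x i t) (Rapp (x j t) (x i t) (v j t)) - radial t i)).
Proof.
  intros hx; unfold accel, vel_rhs; rewrite !vdot_addr, vdot_scalr, !vdot_vsum, !vnorm_sq.
  replace (rsum N (fun k => vdot (x i t) (vscal (sigma / INR N)
    (vsub (vscal (vdot (x i t) (x i t)) (x k t)) (vscal (vdot (x i t) (x k t)) (x i t)))))) with 0.
  2:{ rewrite <- (Rmult_0_r (INR N)), <- rsum_const; apply rsum_ext; intros.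
      rewrite vdot_scalr, vdot_subr, !vdot_scalr; ring. }
  replace (- (vdot (v i t) (v i t) / vdot (x i t) (x i t)) * vdot (x i t) (x i t)) with (- vdot (v i t) (v i t))
    by (field; exact hx).
  rewrite Rplus_0_r; f_equal; apply rsum_ext; intros; rewrite vdot_scalr, vdot_subr; reflexivity.
Qed.

(* x_i . R(x_j, x_i) v_j is a bounded multiple of radial t j (vdot_Rapp). *)
Lemma radial_rate_bound t i : near_sphere t -> (i < N)%nat ->
  Rabs (vdot (v i t) (v i t) + vdot (x i t) (accel t i)) <=
  rsum N (fun j => psi 0 / INR N * (3 * Rabs (radial t j) + Rabs (radial t i))).
Proof.
  intros [hx hd] hi; destruct (hx i hi) as [hx1 hx2].
  rewrite vdot_x_accel by lra; ring_simplify (vdot (v i t) (v i t) + (- vdot (v i t) (v i t) + rsum N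
    (fun j => psi_at t i j / INR N * (vdot (x i t) (Rapp (x j t) (x i t) (v j t)) - radial t i)))).
  eapply Rle_trans; [apply rsum_abs|apply rsum_le; intros j hj].
  destruct (psi_at_range t i j ltac:(apply Rlt_le, hd; assumption)) as [p1 p2].
  destruct (vdot_Rapp (x j t) (x i t) (v j t)) as [e [he he2]]; rewrite he2; fold (radial t j).
  assert (hinv : 0 < / INR N) by (apply Rinv_0_lt_compat, hNpos).
  assert (Rabs (e * radial t j - radial t i) <= 3 * Rabs (radial t j) + Rabs (radial t i)).
  { eapply Rle_trans; [apply Rabs_triang|rewrite Rabs_Ropp, Rabs_mult, (Rabs_right e) by lra].
    pose proof (Rabs_pos (radial t j)); nra. }
  unfold Rdiv; rewrite !Rabs_mult, (Rabs_right (psi_at t i j)), (Rabs_right (/ INR N)) by lra.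
  apply Rmult_le_compat; try apply Rmult_le_pos; try apply Rabs_pos; nra.
Qed.

Lemma radial_sq_rate t : 0 < t -> near_sphere t ->
  exists d, is_derive radial_sq t d /\ d <= 8 * INR N * psi 0 * radial_sq t.
Proof.
  intros ht hns.
  set (r := fun i => vdot (v i t) (v i t) + vdot (x i t) (accel t i)).
  assert (hr : forall i, (i < N)%nat -> is_derive (fun s => radial s i) t (r i)).
  { intros i hi; eapply is_derive_ext; [|apply is_derive_vdot; [apply x_is_derive|apply v_is_derive]; assumption].
    reflexivity. }
  exists (rsum N (fun i => r i * radial t i + radial t i * r i)); split.
  { apply (is_derive_rsum N (fun i s => radial s i * radial s i)); intros; apply is_derive_Rmult; auto. }
  assert (P0 : 0 <= psi 0) by (apply (psi_range psi 0 hpsi); lra).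
  set (B := radial_sq t).
  apply Rle_trans with (rsum N (fun _ => 8 * psi 0 * B)); [|rewrite rsum_const; lra].
  apply rsum_le; intros i hi.
  assert (2 * (Rabs (radial t i) * Rabs (r i)) <= 8 * psi 0 * B).
  { eapply Rle_trans; [apply Rmult_le_compat_l, Rmult_le_compat_l, (radial_rate_bound t i hns hi);
      [lra|apply Rabs_pos]|].
    rewrite <- !rsum_scal.
    apply Rle_trans with (rsum N (fun _ => 2 * (psi 0 / INR N * (4 * B)))); [|rewrite rsum_const; apply Req_le; field; lra].
    apply rsum_le; intros j hj.
    pose proof (Rabs_mul_le_rsum_sq N (radial t) i j hi hj) as hij.
    pose proof (Rabs_mul_le_rsum_sq N (radial t) i i hi hi) as hii.
    assert (0 <= psi 0 / INR N) by (apply Rmult_le_pos, Rlt_le, Rinv_0_lt_compat; lra).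
    change (rsum N (fun k => radial t k * radial t k)) with B in hij, hii; nra. }
  pose proof (Rle_abs (r i * radial t i)) as habs; rewrite Rabs_mult in habs; cbv beta; nra.
Qed.

Lemma near_sphere_right_nbhd T : 0 <= T -> tangent_at T ->
  (forall i j, (i < N)%nat -> (j < N)%nat -> vdot (vsub (x i T) (x j T)) (vsub (x i T) (x j T)) < 4) ->
  exists eta, 0 < eta /\ forall s, T < s < T + eta -> near_sphere s.
Proof.
  intros hT hI hd.
  destruct (right_nbhd_forall_lt N T (fun i s => (1/2 < vdot (x i s) (x i s) < 2) /\
    forall j, (j < N)%nat -> vdot (vsub (x i s) (x j s)) (vsub (x i s) (x j s)) < 4)) as [eta [heta Heta]].
  2:{ exists eta; split; [exact heta|intros s hs; split; intros; apply Heta; auto]. }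
  intros i hi.
  destruct (right_cont_eps _ T (right_cont_vdot _ _ T (x_right_cont i T hi hT) (x_right_cont i T hi hT))
    (1/2) ltac:(lra)) as [d1 [hd1 H1]].
  destruct (right_nbhd_forall_lt N T (fun j s => vdot (vsub (x i s) (x j s)) (vsub (x i s) (x j s)) < 4))
    as [d2 [hd2 H2]].
  { intros j hj; specialize (hd i j hi hj).
    pose proof (right_cont3_sub _ _ T (x_right_cont i T hi hT) (x_right_cont j T hj hT)) as hc.
    destruct (right_cont_eps _ T (right_cont_vdot _ _ T hc hc) (4 - vdot (vsub (x i T) (x j T)) (vsub (x i T) (x j T)))
      ltac:(lra)) as [d3 [hd3 H3]].
    exists d3; split; [exact hd3|intros s hs; specialize (H3 s hs); simpl in H3; apply Rabs_def2 in H3; lra]. }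
  exists (Rmin d1 d2); split; [apply Rmin_glb_lt; assumption|intros s hs].
  pose proof (Rmin_l d1 d2); pose proof (Rmin_r d1 d2); split; [|intros; apply H2; [lra|assumption]].
  specialize (H1 s ltac:(lra)); simpl in H1; apply Rabs_def2 in H1; destruct (hI i hi) as [e _]; lra.
Qed.

Lemma tangent_right_nbhd T : 0 <= T -> tangent_at T ->
  (forall i j, (i < N)%nat -> (j < N)%nat -> vdot (vsub (x i T) (x j T)) (vsub (x i T) (x j T)) < 4) ->
  exists eta, 0 < eta /\ forall s, T < s < T + eta -> tangent_at s.
Proof.
  intros hT hI hd; destruct (near_sphere_right_nbhd T hT hI hd) as [eta [heta hns]].
  assert (hrad : forall s, T < s < T + eta -> radial_sq s <= 0).
  { intros s hs; set (K := 8 * INR N * psi 0).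
    apply (gronwall_zero radial_sq (fun u => Derive radial_sq u) K T s); [lra| | |].
    - apply right_cont_rsum; intros i hi; apply right_cont_mult;
        apply right_cont_vdot; [apply x_right_cont|apply v_right_cont| apply x_right_cont|apply v_right_cont]; assumption.
    - rewrite <- (Rmult_0_r (INR N)), <- rsum_const; apply rsum_ext; intros i hi.
      unfold radial; destruct (hI i hi) as [_ ->]; ring.
    - intros u hu; destruct (radial_sq_rate u ltac:(lra) (hns u ltac:(lra))) as [d [hd1 hd2]].
      rewrite (is_derive_unique _ _ _ hd1); split; assumption. }
  assert (hzero : forall s, T < s < T + eta -> forall i, (i < N)%nat -> radial s i = 0).
  { intros s hs i hi; pose proof (hrad s hs).
    pose proof (rsum_ge_term N (fun i => radial s i * radial s i) i (fun k _ => Rle_0_sqr _) hi); unfold radial_sq in *; nra. }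
  exists eta; split; [exact heta|intros s hs i hi; split; [|apply (hzero s hs i hi)]].
  destruct (hI i hi) as [<- _]; apply (const_of_derive_zero (fun u => vdot (x i u) (x i u))); [lra| |].
  - apply right_cont_vdot; apply x_right_cont; assumption.
  - intros u hu; pose proof (is_derive_vdot _ _ _ _ _ (x_is_derive i u hi ltac:(lra)) (x_is_derive i u hi ltac:(lra))) as h.
    rewrite (vdot_comm (v i u)) in h; unfold radial in hzero; rewrite (hzero u ltac:(lra) i hi), Rplus_0_r in h; exact h.
Qed.

Lemma tangent_at_0 : tangent_at 0.
Proof.
  intros i hi; destruct (hinit i hi) as [h1 h2]; split; [|rewrite vdot_comm; exact h2].
  rewrite <- vnorm_sq, h1; ring.
Qed.

Lemma tangent_closed T : 0 <= T -> (forall u, 0 <= u < T -> tangent_at u) -> tangent_at T.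
Proof.
  intros hT hbelow; destruct (Rle_lt_or_eq_dec 0 T hT) as [hTpos|<-]; [|exact tangent_at_0].
  intros i hi; pose proof (x_is_derive i T hi hTpos) as hx; pose proof (v_is_derive i T hi hTpos) as hv.
  split; [apply (left_const_continuity (fun s => vdot (x i s) (x i s)))|
          apply (left_const_continuity (fun s => vdot (x i s) (v i s)))];
    try (eapply continuity_pt_of_derive, is_derive_vdot; eassumption); try exact hTpos;
    intros u hu; apply (hbelow u hu i hi).
Qed.

Lemma energy_at_le_initial T : 0 <= T -> (forall u, 0 <= u <= T -> tangent_at u) -> energy_at T <= energy_at 0.
Proof.
  intros hT hI; destruct (Rle_lt_or_eq_dec 0 T hT) as [hTpos|<-]; [|lra].
  apply energy_at_nonincreasing; [lra|exact hTpos|intros s hs; apply hI; lra].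
Qed.

Definition dist_bound := INR N ^ 2 * energy_at 0 / sigma.

Lemma dist_bound_range : 0 <= dist_bound < 2.
Proof.
  unfold dist_bound; pose proof (energy_at_nonneg 0); split.
  - apply Rmult_le_pos; [apply Rmult_le_pos; [apply pow2_ge_0|lra]|apply Rlt_le, Rinv_0_lt_compat, hsigma].
  - apply (Rmult_lt_reg_l sigma); [exact hsigma|].
    replace (sigma * (INR N ^ 2 * energy_at 0 / sigma)) with (INR N ^ 2 * energy_at 0) by (field; lra); lra.
Qed.

Lemma dist_le_bound_upto T i j : 0 <= T -> (forall u, 0 <= u <= T -> tangent_at u) -> (i < N)%nat -> (j < N)%nat ->
  vdot (vsub (x i T) (x j T)) (vsub (x i T) (x j T)) <= dist_bound.
Proof.
  intros hT hI hi hj; eapply Rle_trans; [apply dist_le_energy; assumption|].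
  unfold dist_bound, Rdiv; apply Rmult_le_compat_r; [apply Rlt_le, Rinv_0_lt_compat, hsigma|].
  apply Rmult_le_compat_l; [apply pow2_ge_0|apply energy_at_le_initial; assumption].
Qed.

Lemma tangent_always t : 0 <= t -> tangent_at t.
Proof.
  apply continuous_induction; [exact tangent_closed|intros T hT hI].
  apply tangent_right_nbhd; [exact hT|apply hI; lra|intros i j hi hj].
  pose proof (dist_le_bound_upto T i j hT hI hi hj); pose proof dist_bound_range; lra.
Qed.

Lemma dist_le_bound t i j : 0 <= t -> (i < N)%nat -> (j < N)%nat ->
  vdot (vsub (x i t) (x j t)) (vsub (x i t) (x j t)) <= dist_bound.
Proof. intros ht; apply dist_le_bound_upto; [exact ht|intros; apply tangent_always; lra]. Qed.

Lemma vdot_x_pos t i j : 0 <= t -> (i < N)%nat -> (j < N)%nat -> 0 < vdot (x i t) (x j t).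
Proof.
  intros ht hi hj; pose proof (dist_le_bound t i j ht hi hj); pose proof dist_bound_range.
  destruct (tangent_always t ht i hi) as [h1 _], (tangent_always t ht j hj) as [h2 _].
  rewrite vdot_sub_unit in * by assumption; lra.
Qed.

Lemma x_not_antipodal t i j : 0 <= t -> (i < N)%nat -> (j < N)%nat -> x j t <> vscal (-1) (x i t).
Proof.
  intros ht hi hj e; pose proof (vdot_x_pos t i j ht hi hj) as h.
  destruct (tangent_always t ht i hi) as [h1 _]; rewrite e, vdot_scalr, h1 in h; lra.
Qed.

Definition speed_bound := 1 + INR N * energy_at 0.

Lemma vnorm_v_le t i : 0 <= t -> (i < N)%nat -> vnorm (v i t) <= speed_bound.
Proof.
  intros ht hi; pose proof (vdot_v_le_energy t i hi).
  pose proof (energy_at_le_initial t ht ltac:(intros; apply tangent_always; lra)).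
  assert (vnorm (v i t) ^ 2 <= INR N * energy_at 0) by (rewrite vnorm_sq; nra).
  unfold speed_bound; pose proof (vnorm_ge0 (v i t)); nra.
Qed.

Lemma coord_accel_le t i p : 0 <= t -> (i < N)%nat -> coord p ->
  Rabs (p (accel t i)) <= speed_bound ^ 2 + 2 * psi 0 * speed_bound + 2 * sigma.
Proof.
  intros ht hi hp; set (V := speed_bound).
  assert (hV : forall k, (k < N)%nat -> vnorm (v k t) <= V) by (intros; apply vnorm_v_le; assumption).
  assert (hI := tangent_always t ht).
  assert (hx1 : forall k, (k < N)%nat -> vnorm (x k t) = 1)
    by (intros k hk; unfold vnorm; rewrite (proj1 (hI k hk)); apply sqrt_1).
  assert (hpx : forall k, (k < N)%nat -> Rabs (p (x k t)) <= 1)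
    by (intros k hk; rewrite <- (hx1 k hk); apply coord_le_vnorm, hp).
  assert (hP0 : 0 <= psi 0) by (apply (psi_range psi 0 hpsi); lra).
  assert (hNinv : INR N * / INR N = 1) by (field; lra).
  unfold accel, vel_rhs; rewrite !coord_vadd, coord_vscal, !coord_vsum by exact hp.
  eapply Rle_trans; [apply Rabs_triang|apply Rplus_le_compat];
    [eapply Rle_trans; [apply Rabs_triang|apply Rplus_le_compat]|].
  - rewrite Rabs_mult, Rabs_Ropp, hx1, pow1, Rdiv_1_r, Rabs_right by (apply Rle_ge, pow2_ge_0 || exact hi).
    pose proof (hpx i hi); pose proof (hV i hi); pose proof (vnorm_ge0 (v i t)).
    assert (vnorm (v i t) ^ 2 <= V ^ 2) by (apply pow_incr; lra); pose proof (pow2_ge_0 (vnorm (v i t))); nra.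
  - replace (2 * psi 0 * V) with (INR N * (psi 0 / INR N * (2 * V))) by (field; lra).
    apply rsum_abs_le; intros j hj; rewrite (coord_vscal p), (coord_vsub p), Rabs_mult by exact hp.
    destruct (psi_at_range t i j) as [q1 q2]; [apply dist_unit_le2; [apply (hI i hi)|apply (hI j hj)]|].
    unfold psi_at in q1, q2; unfold Rdiv; rewrite Rabs_mult, !Rabs_right by (apply Rle_ge; auto; apply Rlt_le, Rinv_0_lt_compat; lra).
    assert (Rabs (p (Rapp (x j t) (x i t) (v j t)) - p (v i t)) <= 2 * V).
    { eapply Rle_trans; [apply Rabs_triang|rewrite Rabs_Ropp].
      pose proof (coord_le_vnorm p (v i t) hp); pose proof (hV i hi); pose proof (hV j hj).
      pose proof (coord_le_vnorm p (Rapp (x j t) (x i t) (v j t)) hp).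
      assert (vnorm (Rapp (x j t) (x i t) (v j t)) <= vnorm (v j t))
        by (apply sqrt_le_1_alt, Rapp_contraction; [apply (hI j hj)|apply (hI i hi)]); lra. }
    assert (0 < / INR N) by (apply Rinv_0_lt_compat; lra).
    apply Rmult_le_compat; try apply Rabs_pos; try apply Rmult_le_pos; try nra.
  - replace (2 * sigma) with (INR N * (sigma / INR N * 2)) by (field; lra).
    apply rsum_abs_le; intros k hk; rewrite (coord_vscal p), (coord_vsub p), !(coord_vscal p), Rabs_mult by exact hp.
    rewrite (Rabs_right (sigma / INR N)) by (apply Rle_ge, Rlt_le, Rdiv_lt_0_compat; lra).
    rewrite hx1, pow1, Rmult_1_l by exact hi.
    apply Rmult_le_compat_l; [apply Rlt_le, Rdiv_lt_0_compat; lra|].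
    eapply Rle_trans; [apply Rabs_triang|rewrite Rabs_Ropp, Rabs_mult].
    pose proof (hpx k hk); pose proof (hpx i hi);
      pose proof (vdot_unit_bound _ _ (proj1 (hI i hi)) (proj1 (hI k hk))).
    pose proof (Rabs_pos (vdot (x i t) (x k t))); pose proof (Rabs_pos (p (x i t))); nra.
Qed.

Lemma x_bdd i : (i < N)%nat -> bdd_with_bdd_derive3 (x i).
Proof.
  intros hi p hp; split.
  - exists 1; intros t ht; eapply Rle_trans; [apply coord_le_vnorm, hp|].
    apply vnorm_le; [lra|rewrite (proj1 (tangent_always t ltac:(lra) i hi)); lra].
  - exists speed_bound; intros t ht; exists (p (v i t)); split; [apply is_derive3_coord, x_is_derive; assumption|].
    eapply Rle_trans; [apply coord_le_vnorm, hp|apply vnorm_v_le; [lra|exact hi]].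
Qed.

Lemma v_bdd i : (i < N)%nat -> bdd_with_bdd_derive3 (v i).
Proof.
  intros hi p hp; split.
  - exists speed_bound; intros t ht; eapply Rle_trans; [apply coord_le_vnorm, hp|apply vnorm_v_le; [lra|exact hi]].
  - eexists; intros t ht; exists (p (accel t i)); split; [apply is_derive3_coord, v_is_derive; assumption|].
    apply coord_accel_le; [lra|exact hi|exact hp].
Qed.

Lemma psi_at_lower : exists p0, 0 < p0 /\ forall t i j, 0 <= t -> (i < N)%nat -> (j < N)%nat -> p0 <= psi_at t i j.
Proof.
  destruct (psi_pos_below_2 psi hpsi) as [r [hr hpr]]; exists (psi r); split; [exact hpr|].
  intros t i j ht hi hj; pose proof (dist_le_bound t i j ht hi hj); pose proof dist_bound_range.
  assert (vnorm (vsub (x i t) (x j t)) <= 3/2) by (apply vnorm_le; lra).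
  pose proof (vnorm_ge0 (vsub (x i t) (x j t))).
  destruct hpsi as [_ [hdec _]]; apply hdec; unfold in02; lra.
Qed.

(* Written with the closed form of R rather than [Rapp], whose case split on the
   arguments does not lend itself to differentiation. *)
Definition smooth_misalign t i j := vsub (rodrigues (x j t) (x i t) (v j t)) (v i t).
Definition alignment_error t := rsum2 N (fun i j => vdot (smooth_misalign t i j) (smooth_misalign t i j)).

Lemma misalign_smooth t i j : 0 <= t -> (i < N)%nat -> (j < N)%nat -> misalign t i j = smooth_misalign t i j.
Proof.
  intros ht hi hj; unfold misalign, smooth_misalign; rewrite Rapp_rodrigues;
    [reflexivity|apply (tangent_always t ht j hj)|apply (tangent_always t ht i hi)|apply x_not_antipodal; assumption].
Qed.

Lemma alignment_error_bdd : bdd_with_bdd_derive alignment_error.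
Proof.
  apply (bdd_with_bdd_derive_rsum N (fun i t => rsum N (fun j => vdot (smooth_misalign t i j) (smooth_misalign t i j))));
    intros i hi; apply (bdd_with_bdd_derive_rsum N (fun j t => vdot (smooth_misalign t i j) (smooth_misalign t i j)));
    intros j hj.
  assert (hS : bdd_with_bdd_derive3 (fun t => smooth_misalign t i j)); [|apply bdd_with_bdd_derive_vdot; exact hS].
  apply bdd_with_bdd_derive3_sub; [|apply v_bdd, hi].
  apply bdd_with_bdd_derive3_rodrigues; [apply x_bdd, hj|apply x_bdd, hi|apply v_bdd, hj|].
  exists 1; split; [lra|intros t ht; pose proof (vdot_x_pos t j i ltac:(lra) hj hi); lra].
Qed.

Lemma energy_rate_le_alignment p0 : (forall t i j, 0 <= t -> (i < N)%nat -> (j < N)%nat -> p0 <= psi_at t i j) ->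
  forall t, 0 < t -> energy_rate t <= - (p0 / INR N ^ 2) * alignment_error t.
Proof.
  intros hp0 t ht; rewrite energy_rate_dissipation by (apply tangent_always; lra).
  assert (p0 * alignment_error t <= rsum2 N (fun i j => psi_at t i j * vdot (misalign t i j) (misalign t i j))).
  { unfold alignment_error; rewrite <- rsum2_scal; apply rsum2_le; intros i j hi hj.
    rewrite misalign_smooth by (lra || assumption).
    apply Rmult_le_compat_r; [apply vdot_ge0|apply hp0; lra || assumption]. }
  assert (0 < / INR N ^ 2) by (apply Rinv_0_lt_compat, pow_lt; lra); unfold Rdiv; nra.
Qed.

Lemma alignment_error_vanishes : forall eps, 0 < eps -> exists M, forall t, M < t -> alignment_error t < eps.
Proof.
  destruct psi_at_lower as [p0 [hp0 hpl]]; destruct alignment_error_bdd as [_ [L hL]].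
  apply (barbalat energy_at energy_rate alignment_error (p0 / INR N ^ 2) L).
  - apply Rdiv_lt_0_compat; [exact hp0|apply pow_lt; lra].
  - exact energy_at_is_derive.
  - exact (energy_rate_le_alignment p0 hpl).
  - intros; apply rsum2_nonneg; intros; apply vdot_ge0.
  - intros; apply energy_at_nonneg.
  - exact hL.
Qed.

Lemma vdot_x_add_range t i j : 0 <= t -> (i < N)%nat -> (j < N)%nat ->
  4 - dist_bound <= vdot (vadd (x i t) (x j t)) (vadd (x i t) (x j t)) <= 4.
Proof.
  intros ht hi hj; pose proof (dist_le_bound t i j ht hi hj).
  destruct (tangent_always t ht i hi) as [h1 _], (tangent_always t ht j hj) as [h2 _].
  pose proof (vdot_unit_bound _ _ h1 h2) as hb; apply Rabs_le_between in hb.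
  rewrite vdot_sub_unit in * by assumption; rewrite vdot_add_unit by assumption; lra.
Qed.

Lemma misalign_weighted_le t i j : 0 <= t -> (i < N)%nat -> (j < N)%nat ->
  0 <= vnorm (vadd (x i t) (x j t)) * vnorm (misalign t i j) <= 2 * sqrt (alignment_error t).
Proof.
  intros ht hi hj; split; [apply Rmult_le_pos; apply vnorm_ge0|].
  apply Rmult_le_compat; try apply vnorm_ge0.
  - apply vnorm_le; [lra|pose proof (vdot_x_add_range t i j ht hi hj); lra].
  - rewrite misalign_smooth by assumption; apply sqrt_le_1_alt.
    apply (rsum2_ge_term N (fun i j => vdot (smooth_misalign t i j) (smooth_misalign t i j)));
      [intros; apply vdot_ge0|exact hi|exact hj].
Qed.

Lemma max_misalign_le t : 0 <= t ->
  0 <= rmax2 N (fun i j => vnorm (vadd (x i t) (x j t)) * vnorm (misalign t i j)) <= 2 * sqrt (alignment_error t).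
Proof.
  intros ht; split.
  - eapply Rle_trans, rmax_ge_first, hN; eapply Rle_trans, rmax_ge_first, hN.
    apply misalign_weighted_le; [exact ht|lia|lia].
  - apply rmax_le; [exact hN|intros i hi]; apply rmax_le; [exact hN|intros j hj].
    apply misalign_weighted_le; assumption.
Qed.

Lemma antipodal_separation : exists delta, 0 < delta /\
  forall t, 0 <= t -> delta <= rmin2 N (fun i j => vnorm (vadd (x i t) (x j t))).
Proof.
  pose proof dist_bound_range; exists (sqrt (4 - dist_bound)); split; [apply sqrt_lt_R0; lra|intros t ht].
  apply rmin_ge; [exact hN|intros i hi]; apply rmin_ge; [exact hN|intros j hj].
  apply sqrt_le_1_alt, (vdot_x_add_range t i j ht hi hj).
Qed.

End Flocking.

Theorem theorem4p7 (N : nat) (sigma : R) (psi : R -> R)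
    (x v : nat -> R -> vec3) :
  (1 <= N)%nat -> 0 < sigma -> admissible_psi psi ->
  is_solution N sigma psi x v ->
  (forall i, (i < N)%nat -> vnorm (x i 0) = 1 /\ vdot (v i 0) (x i 0) = 0) ->
  2 * sigma > INR N ^ 2 * energy N sigma (fun k => x k 0) (fun k => v k 0) ->
  is_lim (fun t => rmax2 N (fun i j =>
            vnorm (vadd (x i t) (x j t)) *
            vnorm (vsub (Rapp (x j t) (x i t) (v j t)) (v i t))))
         p_infty 0 /\
  exists delta, 0 < delta /\
    forall t, 0 <= t -> delta <= rmin2 N (fun i j => vnorm (vadd (x i t) (x j t))).
Proof.
  intros hN hsigma hpsi hsol hinit henergy; split.
  - apply (is_lim_zero_of_sqrt_bound _ (alignment_error N x v) 2); [lra| |].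
    + intros t ht; apply (max_misalign_le N sigma psi x v); assumption || lra.
    + apply (alignment_error_vanishes N sigma psi x v); assumption.
  - apply (antipodal_separation N sigma psi x v); assumption.
Qed.
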